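(* Fix $\delta>0$ and let $s_\infty:=1/\mathcal E_{\delta,\infty}(\tau_1)$. For every $\varepsilon>0$ there exists $T_0=T_0(\varepsilon)\in\mathbb N$ such that $$\lim_{N\to\infty}\sup_{T\in2\mathbb N,\,T\ge T_0}\mathcal P_{\delta,T}\Big(\Big|\frac{L_N}{N}-s_\infty\Big|>\varepsilon\Big)=0,$$ where $L_N:=\max\{j\ge0:\tau_j\le N\}$.
   Context: $(S_n)$ is the simple symmetric random walk on $\mathbb Z$ started at $0$ with law $\mathbf P$. For $T\in2\mathbb N\cup\{\infty\}$ (convention $\infty\mathbb Z=\{0\}$), $\tau_1^T:=\inf\{n>0:S_n\in T\mathbb Z\}$, $q_T(n):=\mathbf P(\tau^T_1=n)$, $Q_T(\lambda):=\mathbf E[e^{-\lambda\tau^T_1}]$. For $\delta>0$, $\phi(\delta,T)$ is the unique real solution $\lambda$ of $Q_T(\lambda)=e^{-\delta}$. Under $\mathcal P_{\delta,T}$ (expectation $\mathcal E_{\delta,T}$), $(\xi_i)_{i\ge1}$ are i.i.d. with $\mathcal P_{\delta,T}(\xi_1=n)=e^\delta q_T(n)e^{-\phi(\delta,T)n}$, $n\in\mathbb N$; $\tau_0:=0$, $\tau_n:=\xi_1+\dots+\xi_n$. *)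

From Stdlib Require Import Reals Lra Lia ZArith Arith List Classical ClassicalEpsilon.
Import ListNotations.
Open Scope R_scope.

(* Period T in 2N u {infinity}: [Some t] is the finite period t (t > 0),
   [None] is T = infinity, with the convention infinity*Z = {0}. *)
Definition inTZ (T : option nat) (x : Z) : bool :=
  match T with
  | Some t => Z.eqb (Z.modulo x (Z.of_nat t)) 0
  | None => Z.eqb x 0
  end.

(* All +/-1 step sequences (true = +1, false = -1) of length n. *)
Fixpoint all_steps (n : nat) : list (list bool) :=
  match n with
  | O => [[]]
  | S m => flat_map (fun l => [true :: l; false :: l]) (all_steps m)
  end.

Definition Spos (l : list bool) (k : nat) : Z :=
  fold_right Z.add 0%Z (map (fun b : bool => if b then 1%Z else (-1)%Z) (firstn k l)).

(* tau_1^T = length l for the path l: S_k notin TZ for 0<k<n, S_n in TZ, n>0. *)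
Definition first_hit (T : option nat) (l : list bool) : bool :=
  let n := length l in
  (0 <? n)%nat
  && forallb (fun k => negb (inTZ T (Spos l k))) (seq 1 (n - 1))
  && inTZ T (Spos l n).

(* q_T(n) = P(tau_1^T = n) for the simple symmetric random walk. *)
Definition q (T : option nat) (n : nat) : R :=
  INR (length (filter (first_hit T) (all_steps n))) / 2 ^ n.

(* phi(delta,T): the (unique) real lambda with Q_T(lambda) = e^{-delta},
   where Q_T(lambda) = sum_n q_T(n) e^{-lambda n}. *)
Definition phi (delta : R) (T : option nat) : R :=
  epsilon (inhabits 0%R)
    (fun lam => infinite_sum (fun n => q T n * exp (- (lam * INR n))) (exp (- delta))).

(* P_{delta,T}(xi_1 = n) *)
Definition pxi (delta : R) (T : option nat) (n : nat) : R :=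
  exp delta * q T n * exp (- (phi delta T * INR n)).

(* E_{delta,T}(tau_1) = sum_n n P(xi_1 = n) *)
Definition mean_xi (delta : R) (T : option nat) : R :=
  epsilon (inhabits 0%R)
    (fun m => infinite_sum (fun n => INR n * pxi delta T n) m).

(* Lists (x_1,...,x_k) of positive integers with x_1+...+x_k <= m. *)
Fixpoint comps (k m : nat) : list (list nat) :=
  match k with
  | O => [[]]
  | S k' => flat_map (fun x => map (cons x) (comps k' (m - x))) (seq 1 m)
  end.

Definition prodR (f : nat -> R) (l : list nat) : R :=
  fold_right Rmult 1 (map f l).

Definition sumR (l : list R) : R := fold_right Rplus 0 l.

(* P_{delta,T}(tau_k <= m), using independence of the xi_i. *)
Definition P_tau_le (delta : R) (T : option nat) (k m : nat) : R :=
  sumR (map (prodR (pxi delta T)) (comps k m)).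

(* P_{delta,T}(L_N = k) = P(tau_k <= N) - P(tau_{k+1} <= N),
   where L_N = max{j >= 0 : tau_j <= N}. *)
Definition P_L_eq (delta : R) (T : option nat) (N k : nat) : R :=
  P_tau_le delta T k N - P_tau_le delta T (S k) N.

(* P_{delta,T}(|L_N/N - s| > eps); since xi_i >= 1, L_N <= N. *)
Definition P_dev (delta : R) (T : option nat) (N : nat) (s eps : R) : R :=
  sumR (map (fun k => if Rlt_dec eps (Rabs (INR k / INR N - s))
                      then P_L_eq delta T N k else 0)
            (seq 0 (S N))).

From Stdlib Require Import Reals Lra Lia ZArith List ClassicalEpsilon FunctionalExtensionality.
Import ListNotations.
Open Scope R_scope.

(** Law of large numbers for the renewal count [L_N] under [P_{delta,T}],
    uniformly in the period [T].  Write [L = phi delta None],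
    [m = E_{delta,oo}(tau_1)] and [s_inf = 1/m].

    1. Random walk: [q T] satisfies the first-passage recursion, [q (Some t)]
       and [q None] agree below [t], and [sum_n q None n = 1] (recurrence).
    2. Laplace transforms of [[0,1]]-valued sequences are continuous and
       insensitive to tails; hence [phi delta None] exists, is positive, and
       [phi delta (Some t) -> phi delta None].
    3. The moment generating function [mgf delta T th = E_T[exp (th xi_1)]]
       satisfies [mgf delta None th <= 1 + th m + C th^2], and for large [t]
       the same bound holds for [mgf delta (Some t)] up to an [th^2] error.
    4. Chernoff bounds on [tau_k] turn such exponential moment bounds into
       [P(|L_N/N - s| > eps) <= K exp (- gam N)] for a general renewal law.
    5. A small tilt [th] yields admissible rates; the theorem follows. *)

Lemma sumR_app l1 l2 : sumR (l1 ++ l2) = sumR l1 + sumR l2.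
Proof. induction l1 as [|x l1 IH]; simpl; [lra|]. rewrite IH. lra. Qed.

Lemma sumR_flat_map {A B} (f : B -> R) (g : A -> list B) L :
  sumR (map f (flat_map g L)) = sumR (map (fun a => sumR (map f (g a))) L).
Proof. induction L as [|a L IH]; simpl; auto. rewrite map_app, sumR_app, IH. reflexivity. Qed.

Lemma sumR_plus {A} (f g : A -> R) L :
  sumR (map (fun a => f a + g a) L) = sumR (map f L) + sumR (map g L).
Proof. induction L as [|a L IH]; simpl; [lra|]. rewrite IH. lra. Qed.

Lemma sumR_scal {A} c (f : A -> R) L : sumR (map (fun x => c * f x) L) = c * sumR (map f L).
Proof. induction L as [|a L IH]; simpl; [ring|]. rewrite IH. ring. Qed.

Lemma sumR_zero {A} (L : list A) : sumR (map (fun _ => 0) L) = 0.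
Proof. induction L as [|a L IH]; simpl; [lra|]. rewrite IH. lra. Qed.

Lemma sumR_le {A} (f g : A -> R) L : (forall x, f x <= g x) -> sumR (map f L) <= sumR (map g L).
Proof. intro H. induction L as [|a L IH]; simpl; [lra|]. pose proof (H a). lra. Qed.

Lemma sum_f_R0_sumR f m : sum_f_R0 f m = sumR (map f (seq 0 (S m))).
Proof.
  induction m as [|m IH]; [simpl; ring|].
  rewrite seq_S, map_app, sumR_app, <- IH. simpl. ring.
Qed.

Lemma sum_shift f n : sum_f_R0 f (S n) = f 0%nat + sum_f_R0 (fun j => f (S j)) n.
Proof. induction n as [|n IH]; simpl in *; [lra|]. rewrite IH. lra. Qed.

Lemma sum_scal_l c f n : sum_f_R0 (fun j => c * f j) n = c * sum_f_R0 f n.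
Proof. induction n as [|n IH]; simpl; [lra|]. rewrite IH. lra. Qed.

Lemma sum_ge_last f n : (forall j, 0 <= f j) -> f n <= sum_f_R0 f n.
Proof.
  intro H. destruct n; simpl; [lra|].
  assert (0 <= sum_f_R0 f n) by (apply cond_pos_sum; auto). lra.
Qed.

(** * First-passage probabilities of the simple random walk *)

Definition step_value (b : bool) : Z := if b then 1%Z else (-1)%Z.

Definition first_hit_set (A : Z -> bool) (l : list bool) : bool :=
  ((0 <? length l)%nat && forallb (fun k => negb (A (Spos l k))) (seq 1 (length l - 1))
   && A (Spos l (length l)))%bool.

Definition indicator (b : bool) : R := if b then 1 else 0.

Definition hit_prob (A : Z -> bool) (n : nat) : R :=
  sumR (map (fun l => indicator (first_hit_set A l)) (all_steps n)) / 2 ^ n.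

Lemma all_steps_length n l : In l (all_steps n) -> length l = n.
Proof.
  revert l; induction n as [|n IH]; simpl; intros l H.
  - destruct H as [<-|[]]; reflexivity.
  - apply in_flat_map in H. destruct H as [l' [H1 H2]].
    destruct H2 as [<-|[<-|[]]]; simpl; f_equal; auto.
Qed.

Lemma sumR_all_steps_S (f : list bool -> R) n :
  sumR (map f (all_steps (S n))) = sumR (map (fun l => f (true :: l) + f (false :: l)) (all_steps n)).
Proof.
  simpl (all_steps (S n)). rewrite sumR_flat_map. f_equal.
  apply map_ext. intro l. simpl. lra.
Qed.

Lemma length_filter_sumR {A} (P : A -> bool) L :
  INR (length (filter P L)) = sumR (map (fun l => indicator (P l)) L).
Proof.
  induction L as [|a L IH]; [reflexivity|]. cbn [filter map sumR].
  destruct (P a); cbn [length]; rewrite ?S_INR, IH; simpl; lra.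
Qed.

Lemma q_hit_prob T n : q T n = hit_prob (inTZ T) n.
Proof. unfold q, hit_prob. rewrite length_filter_sumR. reflexivity. Qed.

Lemma hit_prob_ext A B n : (forall z, A z = B z) -> hit_prob A n = hit_prob B n.
Proof. intro H. apply functional_extensionality in H. subst. reflexivity. Qed.

Lemma hit_prob_0 A : hit_prob A 0 = 0.
Proof. unfold hit_prob. simpl. lra. Qed.

Lemma forallb_map_S (f : nat -> bool) s : forallb f (map S s) = forallb (fun k => f (S k)) s.
Proof. induction s as [|k s IH]; simpl; auto. rewrite IH; auto. Qed.

Lemma first_hit_set_cons A b l : first_hit_set A (b :: l) =
  match l with
  | [] => A (step_value b)
  | _ => (negb (A (step_value b)) && first_hit_set (fun z => A (step_value b + z)%Z) l)%bool
  end.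
Proof.
  unfold first_hit_set. destruct l as [|c l'].
  - destruct b; reflexivity.
  - remember (c :: l') as l. simpl length.
    assert (Hl : (length l = S (length l - 1))%nat) by (subst; simpl; lia).
    rewrite Hl. replace (S (S (length l - 1)) - 1)%nat with (S (length l - 1)) by lia.
    simpl seq. rewrite <- (seq_shift (length l - 1) 1). simpl forallb.
    rewrite forallb_map_S, Nat.sub_0_r.
    replace (Spos (b :: l) 1) with (step_value b) by (destruct b; reflexivity).
    change (fun k => negb (A (Spos (b :: l) (S k))))
      with (fun k => negb (A (step_value b + Spos l k)%Z)).
    change (Spos (b :: l) (S (S (length l - 1))))
      with (step_value b + Spos l (S (length l - 1)))%Z.
    simpl. destruct (negb (A (step_value b))), (forallb _ _); reflexivity.
Qed.

Lemma hit_prob_S A n : hit_prob A (S n) = / 2 * (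
   match n with O => indicator (A 1%Z)
   | _ => if A 1%Z then 0 else hit_prob (fun z => A (1 + z)%Z) n end +
   match n with O => indicator (A (-1)%Z)
   | _ => if A (-1)%Z then 0 else hit_prob (fun z => A (-1 + z)%Z) n end).
Proof.
  unfold hit_prob at 1. rewrite sumR_all_steps_S. destruct n.
  - simpl. rewrite !first_hit_set_cons. simpl. lra.
  - rewrite (map_ext_in _ (fun l =>
        (if A 1%Z then 0 else indicator (first_hit_set (fun z => A (1 + z)%Z) l))
      + (if A (-1)%Z then 0 else indicator (first_hit_set (fun z => A (-1 + z)%Z) l)))).
    2:{ intros l Hl. apply all_steps_length in Hl. destruct l as [|c l']; [discriminate|].
        rewrite !first_hit_set_cons. simpl step_value. unfold indicator.
        destruct (A 1%Z), (A (-1)%Z); reflexivity. }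
    rewrite sumR_plus. unfold hit_prob.
    assert (0 < 2 ^ S n) by (apply pow_lt; lra).
    change (2 ^ S (S n)) with (2 * 2 ^ S n).
    destruct (A 1%Z), (A (-1)%Z); rewrite ?sumR_zero; field; lra.
Qed.

(** [entrance A y n]: probability that the walk started at [y] is in [A]
    for the first time at time [n] (time [0] included).
    [avoid A y n]: probability that it stays outside [A] at times [0..n]. *)
Fixpoint entrance (A : Z -> bool) (y : Z) (n : nat) : R :=
  match n with
  | O => indicator (A y)
  | S m => if A y then 0 else / 2 * (entrance A (y + 1) m + entrance A (y - 1) m)
  end.

Fixpoint avoid (A : Z -> bool) (y : Z) (n : nat) : R :=
  match n with
  | O => if A y then 0 else 1
  | S m => if A y then 0 else / 2 * (avoid A (y + 1) m + avoid A (y - 1) m)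
  end.

Lemma hit_prob_entrance : forall n A y,
  hit_prob (fun z => A (y + z)%Z) (S n) = / 2 * (entrance A (y + 1) n + entrance A (y - 1) n).
Proof.
  induction n as [|n IH]; intros A y; rewrite hit_prob_S.
  - simpl. replace (y + -1)%Z with (y - 1)%Z by ring. reflexivity.
  - rewrite (hit_prob_ext _ (fun z => A ((y + 1) + z)%Z)) by (intro; f_equal; ring).
    rewrite (hit_prob_ext (fun z => A (y + (-1 + z))%Z) (fun z => A ((y - 1) + z)%Z))
      by (intro; f_equal; ring).
    rewrite !IH. replace (y + -1)%Z with (y - 1)%Z by ring. reflexivity.
Qed.

Lemma q_S T n :
  q T (S n) = / 2 * (entrance (inTZ T) 1 n + entrance (inTZ T) (-1) n).
Proof.
  rewrite q_hit_prob, (hit_prob_ext _ (fun z => inTZ T (0 + z)%Z)) by reflexivity.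
  apply hit_prob_entrance.
Qed.

Lemma q_0 T : q T 0 = 0.
Proof. rewrite q_hit_prob. apply hit_prob_0. Qed.

Lemma entrance_nonneg : forall n A y, 0 <= entrance A y n.
Proof.
  induction n as [|n IH]; intros A y; simpl.
  - unfold indicator. destruct (A y); lra.
  - pose proof (IH A (y + 1)%Z). pose proof (IH A (y - 1)%Z). destruct (A y); lra.
Qed.

Lemma avoid_nonneg : forall n A y, 0 <= avoid A y n.
Proof.
  induction n as [|n IH]; intros A y; simpl.
  - destruct (A y); lra.
  - pose proof (IH A (y + 1)%Z). pose proof (IH A (y - 1)%Z). destruct (A y); lra.
Qed.

Lemma avoid_le1 : forall n A y, avoid A y n <= 1.
Proof.
  induction n as [|n IH]; intros A y; simpl.
  - destruct (A y); lra.
  - pose proof (IH A (y + 1)%Z). pose proof (IH A (y - 1)%Z). destruct (A y); lra.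
Qed.

(** Conservation of probability: by time [n] the walk has either entered [A]
    at some time [j <= n] or avoided it throughout. *)
Lemma entrance_avoid : forall n A y, sum_f_R0 (entrance A y) n + avoid A y n = 1.
Proof.
  induction n as [|n IH]; intros A y.
  - simpl. unfold indicator. destruct (A y); lra.
  - rewrite sum_shift. simpl (entrance A y 0). simpl (avoid A y (S n)). unfold indicator.
    destruct (A y) eqn:E.
    + rewrite (sum_eq _ (fun _ => 0 * 1)) by (intros; simpl; rewrite E; ring).
      rewrite sum_scal_l. lra.
    + rewrite (sum_eq _ (fun j => / 2 * (entrance A (y + 1) j + entrance A (y - 1) j)))
        by (intros; simpl; rewrite E; reflexivity).
      rewrite sum_scal_l, sum_plus.
      pose proof (IH A (y + 1)%Z). pose proof (IH A (y - 1)%Z). lra.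
Qed.

Lemma q_nonneg T n : 0 <= q T n.
Proof.
  destruct n; [rewrite q_0; lra|]. rewrite q_S.
  pose proof (entrance_nonneg n (inTZ T) 1). pose proof (entrance_nonneg n (inTZ T) (-1)). lra.
Qed.

Lemma entrance_le1 n A y : entrance A y n <= 1.
Proof.
  pose proof (entrance_avoid n A y). pose proof (avoid_nonneg n A y).
  pose proof (sum_ge_last (entrance A y) n (fun j => entrance_nonneg j A y)). lra.
Qed.

Lemma q_le1 T n : q T n <= 1.
Proof.
  destruct n; [rewrite q_0; lra|]. rewrite q_S.
  pose proof (entrance_le1 n (inTZ T) 1). pose proof (entrance_le1 n (inTZ T) (-1)). lra.
Qed.

Lemma entrance_local A B t : (forall z, (Z.abs z < Z.of_nat t)%Z -> A z = B z) ->
  forall n y, (Z.abs y + Z.of_nat n < Z.of_nat t)%Z -> entrance A y n = entrance B y n.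
Proof.
  intros H n. induction n as [|n IH]; intros y Hy; simpl.
  - rewrite H by lia. reflexivity.
  - rewrite H, (IH (y + 1)%Z), (IH (y - 1)%Z) by lia. reflexivity.
Qed.

Lemma inTZ_small t z : (0 < t)%nat -> (Z.abs z < Z.of_nat t)%Z -> inTZ (Some t) z = inTZ None z.
Proof.
  intros Ht Hz. unfold inTZ. destruct (Z.eqb_spec z 0) as [->|Hn].
  - rewrite Zmod_0_l. reflexivity.
  - apply Z.eqb_neq. intro Hm. apply Z.mod_divide in Hm; [|lia].
    destruct Hm as [k Hk]. subst z. assert (k = 0%Z) by nia. subst. lia.
Qed.

(** Before time [t] the walk cannot reach [tZ \ {0}]: [q (Some t)] and
    [q None] agree below [t]. *)
Lemma q_periodic_eq t n : (n < t)%nat -> q (Some t) n = q None n.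
Proof.
  intro H. destruct n; [rewrite !q_0; reflexivity|]. rewrite !q_S.
  assert (Hloc : forall z, (Z.abs z < Z.of_nat t)%Z -> inTZ (Some t) z = inTZ None z)
    by (intros; apply inTZ_small; lia).
  rewrite (entrance_local _ _ t Hloc n 1), (entrance_local _ _ t Hloc n (-1)) by lia.
  reflexivity.
Qed.

Lemma q_None_2 : q None 2 = / 2.
Proof. rewrite q_S. simpl. unfold indicator. simpl. lra. Qed.

(** * Recurrence of the walk: [sum_n q None n = 1]

    Started at [1], the walk avoids [0] for [n] steps with probability at most
    [1/t + (t-1)/n] for every [t >= 1]: either it reaches [t] before [0]
    (gambler's ruin, probability [1/t]), or it stays in [(0,t)], which has
    expected exit time [x(t-x)]. *)

Definition strip (t : Z) (z : Z) : bool := ((z <=? 0)%Z || (t <=? z)%Z)%bool.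

Lemma avoid_zero_opp : forall n x, avoid (inTZ None) (- x) n = avoid (inTZ None) x n.
Proof.
  assert (Hz : forall x, inTZ None (- x) = inTZ None x)
    by (intro x; unfold inTZ; destruct (Z.eqb_spec x 0), (Z.eqb_spec (- x) 0); auto; lia).
  induction n as [|n IH]; intro x; cbn [avoid]; rewrite Hz; [reflexivity|].
  replace (- x + 1)%Z with (- (x - 1))%Z by ring. replace (- x - 1)%Z with (- (x + 1))%Z by ring.
  rewrite !IH. destruct (inTZ None x); lra.
Qed.

Lemma strip_exit_time t : forall n x, (0 <= x <= t)%Z ->
  INR n * avoid (strip t) x n <= IZR (x * (t - x)).
Proof.
  induction n as [|n IH]; intros x Hx.
  - simpl. rewrite Rmult_0_l. apply IZR_le. nia.
  - simpl avoid. destruct (strip t x) eqn:E.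
    + rewrite Rmult_0_r. apply IZR_le. nia.
    + assert (Hin : (1 <= x <= t - 1)%Z)
        by (unfold strip in E; destruct (Z.leb_spec x 0), (Z.leb_spec t x); simpl in E;
            try discriminate; lia).
      assert (Hy : forall y, (0 <= y <= t)%Z ->
                 (INR n + 1) * avoid (strip t) y n <= IZR (y * (t - y)) + 1).
      { intros y Hy. pose proof (IH y Hy). pose proof (avoid_le1 n (strip t) y). lra. }
      pose proof (Hy (x + 1)%Z ltac:(lia)). pose proof (Hy (x - 1)%Z ltac:(lia)).
      assert (Hsum : IZR ((x + 1) * (t - (x + 1))) + IZR ((x - 1) * (t - (x - 1)))
                     = 2 * IZR (x * (t - x)) - 2)
        by (rewrite <- plus_IZR; change 2 with (IZR 2);
            rewrite <- mult_IZR, <- minus_IZR; f_equal; ring).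
      rewrite S_INR. lra.
Qed.

Lemma avoid_zero_le t : (1 <= t)%Z -> forall n x, (0 <= x <= t)%Z ->
  avoid (inTZ None) x n <= IZR x / IZR t + avoid (strip t) x n.
Proof.
  intros Ht n. assert (Htpos : 0 < IZR t) by (apply IZR_lt; lia).
  assert (Hends : forall k x, (x = 0 \/ x = t)%Z ->
            avoid (inTZ None) x k <= IZR x / IZR t + avoid (strip t) x k).
  { intros k x [-> | ->].
    - pose proof (avoid_nonneg k (strip t) 0). unfold Rdiv. rewrite Rmult_0_l. destruct k; simpl; lra.
    - pose proof (avoid_nonneg k (strip t) t). unfold Rdiv. rewrite Rinv_r by lra. pose proof (avoid_le1 k (inTZ None) t). lra. }
  induction n as [|n IH]; intros x Hx.
  all: destruct (Z.eq_dec x 0) as [H0|H0]; [apply Hends; lia|].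
  all: destruct (Z.eq_dec x t) as [Ht'|Ht']; [apply Hends; lia|].
  all: assert (Hxt : 0 <= IZR x / IZR t)
    by (apply Rmult_le_pos; [apply IZR_le; lia | left; apply Rinv_0_lt_compat; lra]).
  all: assert (E0 : inTZ None x = false) by (apply Z.eqb_neq; exact H0).
  all: assert (E1 : strip t x = false)
    by (unfold strip; destruct (Z.leb_spec x 0), (Z.leb_spec t x); simpl; auto; lia).
  - cbn [avoid]. rewrite E0, E1. lra.
  - cbn [avoid]. rewrite E0, E1.
    pose proof (IH (x + 1)%Z ltac:(lia)). pose proof (IH (x - 1)%Z ltac:(lia)).
    assert (IZR (x + 1) / IZR t + IZR (x - 1) / IZR t = 2 * (IZR x / IZR t))
      by (rewrite plus_IZR, minus_IZR; field; lra).
    lra.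
Qed.

Lemma recurrence e : 0 < e -> exists M, avoid (inTZ None) 1 M < e.
Proof.
  intro He.
  destruct (INR_unbounded (2 / e)) as [k Hk].
  set (t := (Z.of_nat k + 2)%Z).
  assert (Ht : IZR t > 2 / e) by (unfold t; rewrite plus_IZR, <- INR_IZR_INZ; simpl; lra).
  assert (He2 : 0 < 2 / e) by (apply Rdiv_lt_0_compat; lra).
  destruct (INR_unbounded (2 * IZR t / e)) as [n Hn].
  assert (0 < 2 * IZR t / e) by (apply Rdiv_lt_0_compat; lra).
  exists n.
  pose proof (avoid_zero_le t ltac:(unfold t; lia) n 1 ltac:(unfold t; lia)) as Hruin.
  pose proof (strip_exit_time t n 1 ltac:(unfold t; lia)) as Hexit.
  rewrite Z.mul_1_l, minus_IZR in Hexit.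
  assert (H1 : 1 / IZR t < e / 2).
  { apply (Rmult_lt_reg_r (2 * IZR t / e)); [lra|].
    replace (1 / IZR t * (2 * IZR t / e)) with (2 / e) by (field; lra).
    replace (e / 2 * (2 * IZR t / e)) with (IZR t) by (field; lra). lra. }
  assert (H2 : avoid (strip t) 1 n < e / 2).
  { apply (Rmult_lt_reg_l (INR n)); [lra|].
    apply Rle_lt_trans with (IZR t - 1); [simpl in Hexit; lra|].
    replace (INR n * (e / 2)) with (INR n * e / 2) by field.
    apply Rlt_le_trans with (IZR t); [lra|].
    apply (Rmult_le_reg_r (2 / e)); [lra|].
    replace (INR n * e / 2 * (2 / e)) with (INR n) by (field; lra).
    replace (IZR t * (2 / e)) with (2 * IZR t / e) by (field; lra). lra. }
  simpl in Hruin. lra.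
Qed.

Lemma q_None_partial_sum n : sum_f_R0 (q None) (S n) = 1 - avoid (inTZ None) 1 n.
Proof.
  rewrite sum_shift, q_0.
  rewrite (sum_eq _ (fun j => / 2 * (entrance (inTZ None) 1 j + entrance (inTZ None) (-1) j)))
    by (intros; apply q_S).
  rewrite sum_scal_l, sum_plus.
  pose proof (entrance_avoid n (inTZ None) 1). pose proof (entrance_avoid n (inTZ None) (-1)).
  pose proof (avoid_zero_opp n 1). simpl in *. lra.
Qed.

Lemma exp_le x y : x <= y -> exp x <= exp y.
Proof. intros [H|H]; [left; apply exp_increasing; auto | subst; lra]. Qed.

Lemma exp_neg_lt1 c : 0 < c -> exp (- c) < 1.
Proof. intro. rewrite <- exp_0. apply exp_increasing. lra. Qed.

Lemma exp_pow_nat c n : exp c ^ n = exp (c * INR n).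
Proof.
  induction n as [|n IH]; simpl; [rewrite Rmult_0_r, exp_0; reflexivity|].
  rewrite IH, <- exp_plus. f_equal. destruct n; simpl; ring.
Qed.

Lemma Rabs_le_inv a b : Rabs a <= b -> - b <= a <= b.
Proof. intro H. pose proof (Rle_abs a). pose proof (Rle_abs (- a)). rewrite Rabs_Ropp in *. lra. Qed.

Lemma exp_decay_eventually K C e : 0 < K -> 0 < e ->
  exists T0, forall T, (T0 <= T)%nat -> exp (- (K * INR T)) * C < e.
Proof.
  intros HK He. destruct (INR_unbounded (Rabs C / (K * e))) as [T0 H0]. exists T0.
  intros T HT. apply le_INR in HT. pose proof (exp_ineq1_le (K * INR T)).
  assert (0 <= Rabs C / (K * e)) by (apply Rmult_le_pos; [apply Rabs_pos|];
                                     left; apply Rinv_0_lt_compat; nra).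
  assert (Hlarge : Rabs C < e * exp (K * INR T)).
  { apply (Rmult_lt_reg_r (/ (K * e))); [apply Rinv_0_lt_compat; nra|].
    replace (e * exp (K * INR T) * / (K * e)) with (exp (K * INR T) / K) by (field; lra).
    apply Rlt_le_trans with (INR T); [unfold Rdiv in H0; lra|].
    apply (Rmult_le_reg_r K); [lra|]. replace (exp (K * INR T) / K * K) with (exp (K * INR T))
      by (field; lra). lra. }
  rewrite exp_Ropp. pose proof (exp_pos (K * INR T)). pose proof (Rle_abs C).
  apply (Rmult_lt_reg_l (exp (K * INR T))); [lra|].
  replace (exp (K * INR T) * (/ exp (K * INR T) * C)) with C by (field; lra). lra.
Qed.

Definition geom_sum (c : R) : R := 1 / (1 - exp (- c)).

Lemma geom_sum_pos c : 0 < c -> 0 < geom_sum c.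
Proof. intro. unfold geom_sum. pose proof (exp_neg_lt1 c H). apply Rdiv_lt_0_compat; lra. Qed.

Lemma geom_bound c M : 0 < c -> sum_f_R0 (fun n => exp (- (c * INR n))) M <= geom_sum c.
Proof.
  intro Hc.
  rewrite (sum_eq _ (fun n => exp (- c) ^ n)) by (intros; rewrite exp_pow_nat; f_equal; ring).
  pose proof (exp_neg_lt1 c Hc). pose proof (exp_pos (- c)).
  rewrite tech3 by lra. unfold geom_sum.
  assert (0 < exp (- c) ^ S M) by (apply pow_lt; lra).
  unfold Rdiv. apply Rmult_le_compat_r; [left; apply Rinv_0_lt_compat|]; lra.
Qed.

Lemma linear_exp_le b n : 0 < b -> INR n * exp (- (b * INR n)) <= 1 / b.
Proof.
  intro Hb. pose proof (exp_ineq1_le (b * INR n)). pose proof (exp_pos (b * INR n)).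
  rewrite exp_Ropp. apply (Rmult_le_reg_l (b * exp (b * INR n))); [nra|].
  replace (b * exp (b * INR n) * (INR n * / exp (b * INR n))) with (b * INR n) by (field; lra).
  replace (b * exp (b * INR n) * (1 / b)) with (exp (b * INR n)) by (field; lra). lra.
Qed.

Lemma sq_exp_le c n : 0 < c ->
  INR n ^ 2 * exp (- (c * INR n)) <= (4 / c) ^ 2 * exp (- (c / 2 * INR n)).
Proof.
  intro Hc.
  replace (exp (- (c * INR n)))
    with (exp (- (c / 4 * INR n)) * exp (- (c / 4 * INR n)) * exp (- (c / 2 * INR n)))
    by (rewrite <- !exp_plus; f_equal; field).
  pose proof (linear_exp_le (c / 4) n ltac:(lra)).
  pose proof (exp_pos (- (c / 4 * INR n))). pose proof (exp_pos (- (c / 2 * INR n))).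
  pose proof (pos_INR n).
  replace (4 / c) with (1 / (c / 4)) by (field; lra).
  replace (INR n ^ 2 * (exp (- (c / 4 * INR n)) * exp (- (c / 4 * INR n)) * exp (- (c / 2 * INR n))))
    with ((INR n * exp (- (c / 4 * INR n))) * (INR n * exp (- (c / 4 * INR n)))
          * exp (- (c / 2 * INR n))) by ring.
  apply Rmult_le_compat_r; [lra|]. simpl. rewrite Rmult_1_r.
  apply Rmult_le_compat; try lra; apply Rmult_le_pos; lra.
Qed.

Lemma cv_const c : Un_cv (fun _ => c) c.
Proof. intros e He. exists 0%nat. intros. unfold Rdist. rewrite Rminus_diag, Rabs_R0. lra. Qed.

Lemma series_bounded_converges f B : (forall n, 0 <= f n) -> (forall M, sum_f_R0 f M <= B) ->
  exists l, infinite_sum f l.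
Proof.
  intros H0 HB.
  assert (G : Un_growing (sum_f_R0 f)) by (intro n; simpl; pose proof (H0 (S n)); lra).
  assert (U : has_ub (sum_f_R0 f)) by (exists B; intros x [n ->]; apply HB).
  destruct (growing_cv _ G U) as [l Hl]. exists l. exact Hl.
Qed.

Lemma series_le_bound f l B : infinite_sum f l -> (forall M, sum_f_R0 f M <= B) -> l <= B.
Proof. intros Hl HB. apply (Rle_cv_lim HB Hl (cv_const B)). Qed.

Lemma series_le f g lf lg : infinite_sum f lf -> infinite_sum g lg ->
  (forall n, f n <= g n) -> lf <= lg.
Proof. intros Hf Hg H. apply (Rle_cv_lim (Un := sum_f_R0 f) (Vn := sum_f_R0 g)); auto. intro. apply sum_Rle; auto. Qed.

Lemma series_scal c f l : infinite_sum f l -> infinite_sum (fun n => c * f n) (c * l).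
Proof.
  intro H. apply (Un_cv_ext (fun n => c * sum_f_R0 f n)).
  - intro n. symmetry. apply sum_scal_l.
  - apply (CV_mult (fun _ => c) (sum_f_R0 f)); [apply cv_const | exact H].
Qed.

Lemma series_ext f g l : (forall n, f n = g n) -> infinite_sum f l -> infinite_sum g l.
Proof. intros E H. apply (Un_cv_ext (sum_f_R0 f)); auto. intro n. apply sum_eq. auto. Qed.

Lemma series_diff_bound f g l1 l2 B : infinite_sum f l1 -> infinite_sum g l2 ->
  (forall M, Rabs (sum_f_R0 f M - sum_f_R0 g M) <= B) -> Rabs (l1 - l2) <= B.
Proof.
  intros H1 H2 HB. pose proof (CV_minus _ _ _ _ H1 H2) as D.
  apply Rabs_le. split.
  - apply (Rle_cv_lim (Un := fun _ => - B) (Vn := fun i => sum_f_R0 f i - sum_f_R0 g i)); [|apply cv_const | exact D].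
    intro n. pose proof (Rabs_le_inv _ _ (HB n)). lra.
  - apply (Rle_cv_lim (Un := fun i => sum_f_R0 f i - sum_f_R0 g i) (Vn := fun _ => B)); [|exact D | apply cv_const].
    intro n. pose proof (Rabs_le_inv _ _ (HB n)). lra.
Qed.

Lemma series_le_combination f g1 g2 lf l1 l2 c K :
  infinite_sum f lf -> infinite_sum g1 l1 -> infinite_sum g2 l2 ->
  (forall M, sum_f_R0 f M <= sum_f_R0 g1 M + c * sum_f_R0 g2 M + K) -> lf <= l1 + c * l2 + K.
Proof.
  intros Hf H1 H2 HM.
  apply (Rle_cv_lim (Un := sum_f_R0 f) (Vn := fun M => sum_f_R0 g1 M + c * sum_f_R0 g2 M + K)); auto.
  apply CV_plus; [|apply cv_const]. apply CV_plus; auto.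
  apply (CV_mult (fun _ => c)); [apply cv_const | exact H2].
Qed.

Lemma linear_exp_le_half c n : 0 < c ->
  INR n * exp (- (c * INR n)) <= (2 / c) * exp (- (c / 2 * INR n)).
Proof.
  intro Hc.
  replace (exp (- (c * INR n))) with (exp (- (c / 2 * INR n)) * exp (- (c / 2 * INR n)))
    by (rewrite <- exp_plus; f_equal; field).
  pose proof (linear_exp_le (c / 2) n ltac:(lra)). pose proof (exp_pos (- (c / 2 * INR n))).
  replace (2 / c) with (1 / (c / 2)) by (field; lra).
  rewrite <- Rmult_assoc. apply Rmult_le_compat_r; lra.
Qed.

(** * Laplace transforms of sequences with values in [[0,1]] *)

Definition unit_bounded (p : nat -> R) : Prop := forall n, 0 <= p n <= 1.

Definition laplace (p : nat -> R) (lam : R) : R :=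
  epsilon (inhabits 0) (fun l => infinite_sum (fun n => p n * exp (- (lam * INR n))) l).

Section Laplace.

Variable p : nat -> R.
Hypothesis p_bounded : unit_bounded p.

Lemma laplace_term_nonneg lam n : 0 <= p n * exp (- (lam * INR n)).
Proof. apply Rmult_le_pos; [apply p_bounded | left; apply exp_pos]. Qed.

Lemma laplace_spec lam : 0 < lam ->
  infinite_sum (fun n => p n * exp (- (lam * INR n))) (laplace p lam).
Proof.
  intro Hl. unfold laplace. apply epsilon_spec.
  apply (series_bounded_converges _ (geom_sum lam)); [intro; apply laplace_term_nonneg|].
  intro M. eapply Rle_trans; [|apply (geom_bound lam M Hl)]. apply sum_Rle. intros n _.
  pose proof (p_bounded n). pose proof (exp_pos (- (lam * INR n))). nra.
Qed.

Lemma laplace_nonneg lam : 0 < lam -> 0 <= laplace p lam.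
Proof.
  intro Hl. eapply Rle_trans; [|apply (sum_incr _ 0 _ (laplace_spec lam Hl))].
  - apply laplace_term_nonneg.
  - intro; apply laplace_term_nonneg.
Qed.

Lemma laplace_series_antitone l1 l2 v1 v2 : l1 <= l2 ->
  infinite_sum (fun n => p n * exp (- (l1 * INR n))) v1 ->
  infinite_sum (fun n => p n * exp (- (l2 * INR n))) v2 -> v2 <= v1.
Proof.
  intros H12 H1 H2. apply (series_le _ _ _ _ H2 H1). intro n.
  apply Rmult_le_compat_l; [apply p_bounded|]. apply exp_le. pose proof (pos_INR n). nra.
Qed.

Lemma exp_neg_lipschitz u v w : w <= u -> w <= v ->
  Rabs (exp (- u) - exp (- v)) <= Rabs (u - v) * exp (- w).
Proof.
  intros Hu Hv.
  assert (K : forall u v, w <= u -> u <= v -> exp (- u) - exp (- v) <= (v - u) * exp (- w)).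
  { clear. intros u v Hu Huv.
    replace (exp (- u) - exp (- v)) with (exp (- u) * (1 - exp (- (v - u))))
      by (rewrite Rmult_minus_distr_l, <- exp_plus; f_equal; [ring | f_equal; ring]).
    pose proof (exp_ineq1_le (- (v - u))). pose proof (exp_pos (- u)).
    assert (exp (- u) <= exp (- w)) by (apply exp_le; lra). nra. }
  destruct (Rle_dec u v).
  - assert (exp (- v) <= exp (- u)) by (apply exp_le; lra).
    rewrite Rabs_pos_eq, Rabs_left1 by lra. replace (- (u - v)) with (v - u) by ring. apply K; lra.
  - assert (exp (- u) <= exp (- v)) by (apply exp_le; lra).
    rewrite Rabs_left1, Rabs_pos_eq by lra.
    replace (- (exp (- u) - exp (- v))) with (exp (- v) - exp (- u)) by ring. apply K; lra.
Qed.

Lemma laplace_lipschitz a lam mu : 0 < a -> a <= lam -> a <= mu ->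
  Rabs (laplace p lam - laplace p mu) <= Rabs (lam - mu) * (2 / a * geom_sum (a / 2)).
Proof.
  intros Ha Hl Hm.
  apply (series_diff_bound _ _ _ _ _ (laplace_spec lam ltac:(lra)) (laplace_spec mu ltac:(lra))).
  intro M. rewrite <- minus_sum. eapply Rle_trans; [apply Rabs_triang_gen|].
  apply Rle_trans with (sum_f_R0 (fun n => Rabs (lam - mu) * (2 / a) * exp (- (a / 2 * INR n))) M).
  - apply sum_Rle. intros n _. pose proof (p_bounded n). pose proof (pos_INR n).
    rewrite <- Rmult_minus_distr_l, Rabs_mult, (Rabs_pos_eq (p n)) by lra.
    pose proof (exp_neg_lipschitz (lam * INR n) (mu * INR n) (a * INR n)
       ltac:(apply Rmult_le_compat_r; lra) ltac:(apply Rmult_le_compat_r; lra)) as Hlip.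
    replace (lam * INR n - mu * INR n) with ((lam - mu) * INR n) in Hlip by ring.
    rewrite Rabs_mult, (Rabs_pos_eq (INR n)) in Hlip by lra.
    pose proof (linear_exp_le_half a n Ha). pose proof (Rabs_pos (lam - mu)).
    pose proof (Rabs_pos (exp (- (lam * INR n)) - exp (- (mu * INR n)))).
    apply Rle_trans with (1 * (Rabs (lam - mu) * INR n * exp (- (a * INR n)))).
    + apply Rmult_le_compat; lra.
    + rewrite Rmult_1_l, !Rmult_assoc. apply Rmult_le_compat_l; auto.
  - rewrite sum_scal_l, Rmult_assoc. apply Rmult_le_compat_l; [apply Rabs_pos|].
    apply Rmult_le_compat_l; [left; apply Rdiv_lt_0_compat; lra|]. apply geom_bound. lra.
Qed.

Lemma laplace_gap l1 l2 : 0 < l1 -> l1 <= l2 ->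
  laplace p l2 + p 2%nat * (exp (- (l1 * 2)) - exp (- (l2 * 2))) <= laplace p l1.
Proof.
  intros H1 H12.
  set (d := fun n => p n * exp (- (l1 * INR n)) - p n * exp (- (l2 * INR n))).
  assert (Hd : infinite_sum d (laplace p l1 - laplace p l2)).
  { apply (Un_cv_ext (fun M => sum_f_R0 (fun n => p n * exp (- (l1 * INR n))) M
                              - sum_f_R0 (fun n => p n * exp (- (l2 * INR n))) M)).
    - intro M. unfold d. symmetry. apply minus_sum.
    - apply CV_minus; apply laplace_spec; lra. }
  assert (Hdn : forall n, 0 <= d n).
  { intro n. unfold d. rewrite <- Rmult_minus_distr_l. apply Rmult_le_pos; [apply p_bounded|].
    assert (exp (- (l2 * INR n)) <= exp (- (l1 * INR n))); [|lra].
    apply exp_le. pose proof (pos_INR n). nra. }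
  pose proof (sum_incr d 2 _ Hd Hdn). pose proof (sum_ge_last d 2 Hdn).
  unfold d in H0 at 1. rewrite <- Rmult_minus_distr_l in H0.
  replace (INR 2) with 2 in H0 by (simpl; ring). lra.
Qed.

Lemma laplace_ge_partial a M : 0 < a -> exp (- (a * INR M)) * sum_f_R0 p M <= laplace p a.
Proof.
  intro Ha. eapply Rle_trans; [|apply (sum_incr _ M _ (laplace_spec a Ha) (laplace_term_nonneg a))].
  rewrite <- sum_scal_l. apply sum_Rle. intros n Hn. rewrite Rmult_comm.
  apply Rmult_le_compat_l; [apply p_bounded|]. apply exp_le.
  assert (INR n <= INR M) by (apply le_INR; lia). nra.
Qed.

Lemma laplace_le_geom b : p 0%nat = 0 -> 0 < b -> laplace p b <= exp (- b) * geom_sum b.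
Proof.
  intros H0 Hb. apply (series_le_bound _ _ _ (laplace_spec b Hb)).
  pose proof (geom_sum_pos b Hb). pose proof (exp_pos (- b)).
  intros [|M]; [simpl; rewrite H0; nra|].
  rewrite sum_shift, H0, Rmult_0_l, Rplus_0_l.
  eapply Rle_trans; [|apply Rmult_le_compat_l; [left; apply exp_pos | apply (geom_bound b M Hb)]].
  rewrite <- sum_scal_l. apply sum_Rle. intros n _.
  replace (exp (- (b * INR (S n)))) with (exp (- b) * exp (- (b * INR n)))
    by (rewrite <- exp_plus, S_INR; f_equal; ring).
  pose proof (exp_pos (- (b * INR n))). pose proof (p_bounded (S n)).
  rewrite <- Rmult_assoc, (Rmult_comm (p (S n))), Rmult_assoc.
  apply Rmult_le_compat_l; [lra|]. nra.
Qed.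

Lemma lipschitz_continuity f K : 0 <= K ->
  (forall x y, Rabs (f x - f y) <= K * Rabs (x - y)) -> continuity f.
Proof.
  intros HK H x e He. exists (e / (K + 1)). split; [apply Rdiv_lt_0_compat; lra|].
  intros y [_ Hy]. simpl in *. unfold Rdist in *.
  eapply Rle_lt_trans; [apply H|].
  apply Rle_lt_trans with (K * (e / (K + 1))); [apply Rmult_le_compat_l; lra|].
  assert (K * (e / (K + 1)) = e - e / (K + 1)) by (field; lra).
  assert (0 < e / (K + 1)) by (apply Rdiv_lt_0_compat; lra). lra.
Qed.

Lemma Rmax_lipschitz a x y : Rabs (Rmax a x - Rmax a y) <= Rabs (x - y).
Proof.
  unfold Rmax. destruct (Rle_dec a x), (Rle_dec a y); apply Rabs_le;
  pose proof (Rle_abs (x - y)); pose proof (Rle_abs (- (x - y))); rewrite Rabs_Ropp in *; lra.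
Qed.

Lemma laplace_root a b r : 0 < a -> a < b -> r < laplace p a -> laplace p b < r ->
  exists z, a <= z <= b /\ infinite_sum (fun n => p n * exp (- (z * INR n))) r.
Proof.
  intros Ha Hab H1 H2.
  set (K := 2 / a * geom_sum (a / 2)).
  assert (HK : 0 < K)
    by (apply Rmult_lt_0_compat; [apply Rdiv_lt_0_compat | apply geom_sum_pos]; lra).
  set (f := fun x => r - laplace p (Rmax a x)).
  assert (Hc : continuity f).
  { apply (lipschitz_continuity f K); [lra|]. intros x y. unfold f.
    replace (r - laplace p (Rmax a x) - (r - laplace p (Rmax a y)))
      with (- (laplace p (Rmax a x) - laplace p (Rmax a y))) by ring.
    rewrite Rabs_Ropp. eapply Rle_trans; [apply (laplace_lipschitz a); auto; apply Rmax_l|].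
    rewrite Rmult_comm. apply Rmult_le_compat_l; [lra|]. apply Rmax_lipschitz. }
  assert (fa : f a < 0) by (unfold f; rewrite Rmax_left by lra; lra).
  assert (fb : 0 < f b) by (unfold f; rewrite Rmax_right by lra; lra).
  destruct (IVT f a b Hc Hab fa fb) as [z [Hz Hfz]].
  exists z. split; auto. unfold f in Hfz. rewrite Rmax_right in Hfz by lra.
  replace r with (laplace p z) by lra. apply laplace_spec; lra.
Qed.

End Laplace.

Lemma laplace_tail p p' T c mu : unit_bounded p -> unit_bounded p' ->
  (forall n, (n < T)%nat -> p n = p' n) -> 0 < c -> c <= mu ->
  Rabs (laplace p mu - laplace p' mu) <= exp (- (c / 2 * INR T)) * geom_sum (c / 2).
Proof.
  intros Hp Hp' HT Hc Hm.
  apply (series_diff_bound _ _ _ _ _ (laplace_spec p Hp mu ltac:(lra))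
                                     (laplace_spec p' Hp' mu ltac:(lra))).
  intro M. rewrite <- minus_sum. eapply Rle_trans; [apply Rabs_triang_gen|].
  apply Rle_trans with (sum_f_R0 (fun n => exp (- (c / 2 * INR T)) * exp (- (c / 2 * INR n))) M).
  - apply sum_Rle. intros n _.
    pose proof (exp_pos (- (c / 2 * INR T))). pose proof (exp_pos (- (c / 2 * INR n))).
    destruct (lt_dec n T).
    + rewrite HT by auto. rewrite Rminus_diag, Rabs_R0. apply Rmult_le_pos; lra.
    + rewrite <- Rmult_minus_distr_r, Rabs_mult, (Rabs_pos_eq (exp _)) by (left; apply exp_pos).
      pose proof (Hp n). pose proof (Hp' n).
      assert (Rabs (p n - p' n) <= 1) by (apply Rabs_le; lra).
      assert (INR T <= INR n) by (apply le_INR; lia). pose proof (pos_INR T).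
      rewrite <- exp_plus. pose proof (exp_pos (- (mu * INR n))).
      apply Rle_trans with (1 * exp (- (mu * INR n))); [apply Rmult_le_compat_r; lra|].
      rewrite Rmult_1_l. apply exp_le.
      assert (c * INR n <= mu * INR n) by (apply Rmult_le_compat_r; lra).
      assert (c / 2 * INR T <= c / 2 * INR n) by (apply Rmult_le_compat_l; lra). lra.
  - rewrite sum_scal_l. apply Rmult_le_compat_l; [left; apply exp_pos|]. apply geom_bound. lra.
Qed.

(** * The free energy [phi delta T]

    [phi delta None] exists and is positive because the walk is recurrent
    ([Q_oo(0+) = 1 > exp (- delta)]), and [phi delta (Some t)] converges to
    it as [t -> oo] because [q (Some t)] and [q None] agree below [t]. *)

Lemma q_unit_bounded T : unit_bounded (q T).
Proof. intro n. split; [apply q_nonneg | apply q_le1]. Qed.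

Lemma phi_of_root delta T z :
  infinite_sum (fun n => q T n * exp (- (z * INR n))) (exp (- delta)) ->
  infinite_sum (fun n => q T n * exp (- (phi delta T * INR n))) (exp (- delta)).
Proof. intro Hz. unfold phi. apply epsilon_spec. exists z. exact Hz. Qed.

(** Recurrence: [Q_oo(a)] is as close to [1] as desired for small [a > 0]. *)
Lemma laplace_q_None_near_1 r : 0 < r < 1 -> exists a, 0 < a < 1 /\ r < laplace (q None) a.
Proof.
  intro Hr. set (u := 1 - r). assert (Hu : 0 < u < 1) by (unfold u; lra).
  destruct (recurrence (u / 2) ltac:(lra)) as [n Hn].
  set (M := S n). pose proof (pos_INR M).
  pose proof (q_None_partial_sum n) as Hsum. fold M in Hsum.
  set (a := u / (4 * (INR M + 1))).
  assert (Ha : 0 < a) by (apply Rdiv_lt_0_compat; lra).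
  assert (HaM : a * INR M <= u / 4).
  { unfold a. apply (Rmult_le_reg_r (4 * (INR M + 1))); [lra|].
    replace (u / (4 * (INR M + 1)) * INR M * (4 * (INR M + 1))) with (u * INR M) by (field; lra).
    replace (u / 4 * (4 * (INR M + 1))) with (u * (INR M + 1)) by field. nra. }
  assert (Ha1 : a < 1).
  { unfold a. apply (Rmult_lt_reg_r (4 * (INR M + 1))); [lra|].
    replace (u / (4 * (INR M + 1)) * (4 * (INR M + 1))) with u by (field; lra). lra. }
  exists a. split; [lra|].
  pose proof (laplace_ge_partial _ (q_unit_bounded None) a M Ha).
  pose proof (exp_ineq1_le (- (a * INR M))).
  assert (exp (- (a * INR M)) * sum_f_R0 (q None) M >= (1 - u / 4) * (1 - u / 2))
    by (apply Rle_ge; apply Rmult_le_compat; lra).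
  unfold u in *. nra.
Qed.

Lemma exp_m1_lt_half : exp (- 1) < / 2.
Proof.
  replace (exp (- 1)) with (/ exp 1) by (rewrite <- exp_Ropp; f_equal; ring).
  pose proof (exp_ineq1 1 ltac:(lra)). apply Rinv_lt_contravar; lra.
Qed.

Lemma laplace_q_large_rate delta T : 0 < delta -> laplace (q T) (delta + 1) < exp (- delta).
Proof.
  intro Hd. set (r := exp (- delta)).
  assert (Hr1 : r < 1) by (apply exp_neg_lt1; auto). assert (Hr0 : 0 < r) by apply exp_pos.
  pose proof (laplace_le_geom _ (q_unit_bounded T) (delta + 1) (q_0 T) ltac:(lra)) as H.
  unfold geom_sum in H.
  replace (exp (- (delta + 1))) with (r * exp (- 1)) in H
    by (unfold r; rewrite <- exp_plus; f_equal; ring).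
  pose proof exp_m1_lt_half. pose proof (exp_pos (- 1)).
  assert (0 < 1 - r * exp (- 1)) by nra.
  assert (r * exp (- 1) * (1 / (1 - r * exp (- 1))) < r); [|lra].
  apply (Rmult_lt_reg_r (1 - r * exp (- 1))); auto.
  replace (r * exp (- 1) * (1 / (1 - r * exp (- 1))) * (1 - r * exp (- 1))) with (r * exp (- 1))
    by (field; lra).
  nra.
Qed.

Lemma phi_None_spec delta : 0 < delta ->
  infinite_sum (fun n => q None n * exp (- (phi delta None * INR n))) (exp (- delta)).
Proof.
  intro Hd. pose proof (exp_neg_lt1 delta Hd). pose proof (exp_pos (- delta)).
  destruct (laplace_q_None_near_1 (exp (- delta)) ltac:(lra)) as [a [Ha Hla]].
  destruct (laplace_root _ (q_unit_bounded None) a (delta + 1) (exp (- delta)) ltac:(lra)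
              ltac:(lra) Hla (laplace_q_large_rate delta None Hd)) as [z [_ Hz]].
  exact (phi_of_root delta None z Hz).
Qed.

Lemma phi_None_pos delta : 0 < delta -> 0 < phi delta None.
Proof.
  intro Hd. pose proof (phi_None_spec delta Hd) as Hphi.
  destruct (Rlt_le_dec 0 (phi delta None)) as [|Hl]; auto. exfalso.
  pose proof (exp_neg_lt1 delta Hd).
  destruct (recurrence (1 - exp (- delta)) ltac:(lra)) as [n Hn].
  assert (Hpart : sum_f_R0 (q None) (S n) <= exp (- delta)).
  { eapply Rle_trans; [|apply (sum_incr _ (S n) _ Hphi)].
    - apply sum_Rle. intros k _. rewrite <- (Rmult_1_r (q None k)) at 1.
      apply Rmult_le_compat_l; [apply q_nonneg|]. rewrite <- exp_0. apply exp_le.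
      pose proof (pos_INR k). nra.
    - intro k. apply laplace_term_nonneg, q_unit_bounded. }
  rewrite q_None_partial_sum in Hpart. lra.
Qed.

Definition periodic_tail (delta : R) (t : nat) : R :=
  exp (- (phi delta None / 4 * INR t)) * geom_sum (phi delta None / 4).

Lemma laplace_periodic_tail delta t mu : 0 < delta -> phi delta None / 2 <= mu ->
  Rabs (laplace (q (Some t)) mu - laplace (q None) mu) <= periodic_tail delta t.
Proof.
  intros Hd Hmu. pose proof (phi_None_pos delta Hd). unfold periodic_tail.
  replace (phi delta None / 4) with (phi delta None / 2 / 2) by field.
  apply laplace_tail; try apply q_unit_bounded; try lra.
  intros; apply q_periodic_eq; auto.
Qed.

Lemma periodic_tail_eventually delta e : 0 < delta -> 0 < e ->
  exists T0, forall t, (T0 <= t)%nat -> periodic_tail delta t < e.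
Proof.
  intros Hd He. pose proof (phi_None_pos delta Hd).
  apply exp_decay_eventually; lra.
Qed.

(** [phi delta (Some t) -> phi delta None]: the gap of [Q_oo] around its root
    survives the small perturbation [Q_t - Q_oo]. *)
Lemma phi_periodic_close delta eta : 0 < delta -> 0 < eta -> eta <= phi delta None / 2 ->
  exists T0, forall t, (T0 <= t)%nat ->
    infinite_sum (fun n => q (Some t) n * exp (- (phi delta (Some t) * INR n))) (exp (- delta)) /\
    phi delta None - eta <= phi delta (Some t) <= phi delta None + eta.
Proof.
  intros Hd He Hel.
  pose proof (phi_None_pos delta Hd) as HL. pose proof (phi_None_spec delta Hd) as HS.
  set (L := phi delta None) in *. set (r := exp (- delta)) in *.
  assert (QL : laplace (q None) L = r)
    by (apply (uniqueness_sum _ _ _ (laplace_spec _ (q_unit_bounded None) L HL) HS)).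
  pose proof (laplace_gap _ (q_unit_bounded None) (L - eta) L ltac:(lra) ltac:(lra)) as G1.
  pose proof (laplace_gap _ (q_unit_bounded None) L (L + eta) ltac:(lra) ltac:(lra)) as G2.
  rewrite q_None_2, QL in G1, G2.
  set (d1 := / 2 * (exp (- ((L - eta) * 2)) - exp (- (L * 2)))) in G1.
  set (d2 := / 2 * (exp (- (L * 2)) - exp (- ((L + eta) * 2)))) in G2.
  assert (Hd1 : 0 < d1)
    by (unfold d1; assert (exp (- (L * 2)) < exp (- ((L - eta) * 2))) by (apply exp_increasing; lra);
        lra).
  assert (Hd2 : 0 < d2)
    by (unfold d2; assert (exp (- ((L + eta) * 2)) < exp (- (L * 2))) by (apply exp_increasing; lra);
        lra).
  destruct (periodic_tail_eventually delta (Rmin d1 d2) Hd ltac:(apply Rmin_pos; auto))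
    as [T0 HT0].
  exists T0. intros t Ht. specialize (HT0 t Ht).
  pose proof (Rmin_l d1 d2). pose proof (Rmin_r d1 d2).
  pose proof (Rabs_le_inv _ _ (laplace_periodic_tail delta t (L - eta) Hd ltac:(fold L; lra))).
  pose proof (Rabs_le_inv _ _ (laplace_periodic_tail delta t (L + eta) Hd ltac:(fold L; lra))).
  destruct (laplace_root _ (q_unit_bounded (Some t)) (L - eta) (L + eta) r ltac:(lra) ltac:(lra)
              ltac:(lra) ltac:(lra)) as [z [_ Hz]].
  pose proof (phi_of_root delta (Some t) z Hz) as Hphi.
  split; [exact Hphi|]. set (p := phi delta (Some t)) in *.
  split.
  - destruct (Rle_lt_dec (L - eta) p) as [|Hp]; auto. exfalso.
    pose proof (laplace_series_antitone _ (q_unit_bounded (Some t)) p (L - eta) r _ ltac:(lra) Hphi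
                  (laplace_spec _ (q_unit_bounded (Some t)) (L - eta) ltac:(lra))). lra.
  - destruct (Rle_lt_dec p (L + eta)) as [|Hp]; auto. exfalso.
    pose proof (laplace_series_antitone _ (q_unit_bounded (Some t)) (L + eta) p _ r ltac:(lra)
                  (laplace_spec _ (q_unit_bounded (Some t)) (L + eta) ltac:(lra)) Hphi). lra.
Qed.

(** * The tilted law [pxi delta T] and its moment generating function

    [mgf delta T th = E_{delta,T}[exp (th xi_1)] = exp delta * Q_T(phi delta T - th)]. *)

Definition mgf (delta : R) (T : option nat) (th : R) : R :=
  exp delta * laplace (q T) (phi delta T - th).

Lemma pxi_eq delta T n : pxi delta T n = exp delta * (q T n * exp (- (phi delta T * INR n))).
Proof. unfold pxi. ring. Qed.

Lemma pxi_nonneg delta T n : 0 <= pxi delta T n.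
Proof.
  rewrite pxi_eq. apply Rmult_le_pos; [left; apply exp_pos|].
  apply laplace_term_nonneg, q_unit_bounded.
Qed.

Lemma pxi_0 delta T : pxi delta T 0%nat = 0.
Proof. unfold pxi. rewrite q_0. ring. Qed.

Lemma pxi_sum delta T :
  infinite_sum (fun n => q T n * exp (- (phi delta T * INR n))) (exp (- delta)) ->
  infinite_sum (pxi delta T) 1.
Proof.
  intro H. apply (series_scal (exp delta)) in H.
  rewrite <- exp_plus, Rplus_opp_r, exp_0 in H.
  exact (series_ext _ _ _ (fun n => eq_sym (pxi_eq delta T n)) H).
Qed.

Lemma pxi_exp_eq delta T th n :
  pxi delta T n * exp (th * INR n) = exp delta * (q T n * exp (- ((phi delta T - th) * INR n))).
Proof.
  rewrite pxi_eq.
  replace (exp (- ((phi delta T - th) * INR n))) with (exp (- (phi delta T * INR n)) * exp (th * INR n))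
    by (rewrite <- exp_plus; f_equal; ring).
  ring.
Qed.

Lemma mgf_spec delta T th : 0 < phi delta T - th ->
  infinite_sum (fun n => pxi delta T n * exp (th * INR n)) (mgf delta T th).
Proof.
  intro H. apply (series_ext _ _ _ (fun n => eq_sym (pxi_exp_eq delta T th n))).
  apply series_scal, laplace_spec; [apply q_unit_bounded | exact H].
Qed.

Lemma first_moment_bound p c mu M : unit_bounded p -> 0 < c -> c <= mu ->
  sum_f_R0 (fun n => INR n * (p n * exp (- (mu * INR n)))) M <= 2 / c * geom_sum (c / 2).
Proof.
  intros Hp Hc Hm.
  eapply Rle_trans;
    [|apply Rmult_le_compat_l; [left; apply Rdiv_lt_0_compat; lra | apply (geom_bound (c / 2) M); lra]].
  rewrite <- sum_scal_l. apply sum_Rle. intros n _.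
  pose proof (linear_exp_le_half c n Hc). pose proof (Hp n). pose proof (pos_INR n).
  assert (exp (- (mu * INR n)) <= exp (- (c * INR n))) by (apply exp_le; nra).
  pose proof (exp_pos (- (mu * INR n))).
  apply Rle_trans with (INR n * exp (- (c * INR n))); [|exact H].
  apply Rmult_le_compat_l; [lra|]. nra.
Qed.

Lemma second_moment_bound p c mu M : unit_bounded p -> 0 < c -> c <= mu ->
  sum_f_R0 (fun n => INR n ^ 2 * (p n * exp (- (mu * INR n)))) M <= (4 / c) ^ 2 * geom_sum (c / 2).
Proof.
  intros Hp Hc Hm.
  eapply Rle_trans;
    [|apply Rmult_le_compat_l; [apply pow_le; left; apply Rdiv_lt_0_compat; lra
                               | apply (geom_bound (c / 2) M); lra]].
  rewrite <- sum_scal_l. apply sum_Rle. intros n _.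
  pose proof (sq_exp_le c n Hc). pose proof (Hp n). pose proof (pos_INR n).
  assert (exp (- (mu * INR n)) <= exp (- (c * INR n))) by (apply exp_le; nra).
  pose proof (exp_pos (- (mu * INR n))). pose proof (pow_le (INR n) 2 H1).
  apply Rle_trans with (INR n ^ 2 * exp (- (c * INR n))); [|exact H].
  apply Rmult_le_compat_l; [lra|]. nra.
Qed.

Lemma mean_spec delta : 0 < delta ->
  infinite_sum (fun n => INR n * pxi delta None n) (mean_xi delta None).
Proof.
  intro Hd. pose proof (phi_None_pos delta Hd) as HL. unfold mean_xi. apply epsilon_spec.
  apply (series_bounded_converges _
           (exp delta * (2 / phi delta None * geom_sum (phi delta None / 2)))).
  - intro n. apply Rmult_le_pos; [apply pos_INR | apply pxi_nonneg].
  - intro M.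
    rewrite (sum_eq _ (fun n => exp delta * (INR n * (q None n * exp (- (phi delta None * INR n))))))
      by (intros; rewrite pxi_eq; ring).
    rewrite sum_scal_l. apply Rmult_le_compat_l; [left; apply exp_pos|].
    apply first_moment_bound; [apply q_unit_bounded | auto | lra].
Qed.

Lemma mean_ge1 delta : 0 < delta -> 1 <= mean_xi delta None.
Proof.
  intro Hd.
  apply (series_le _ _ _ _ (pxi_sum delta None (phi_None_spec delta Hd)) (mean_spec delta Hd)).
  intros [|n]; [rewrite pxi_0; simpl; lra|].
  pose proof (pxi_nonneg delta None (S n)). rewrite S_INR. pose proof (pos_INR n). nra.
Qed.

Lemma exp_quadratic_bound x : exp x <= 1 + x + x ^ 2 * exp (Rabs x).
Proof.
  destruct (Rle_lt_dec 0 x) as [Hx|Hx].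
  - rewrite Rabs_pos_eq by lra.
    pose proof (exp_ineq1_le (- x)). pose proof (exp_pos x).
    assert (exp (- x) * exp x = 1) by (rewrite <- exp_plus, Rplus_opp_l; apply exp_0).
    assert (exp x - 1 <= x * exp x) by nra.
    assert (x * (exp x - 1) <= x * (x * exp x)) by (apply Rmult_le_compat_l; lra).
    assert (exp x - 1 - x <= x * (exp x - 1)) by nra.
    simpl. nra.
  - rewrite Rabs_left by lra.
    pose proof (exp_ineq1_le (- x)). pose proof (exp_pos x).
    assert (exp x * exp (- x) = 1) by (rewrite <- exp_plus, Rplus_opp_r; apply exp_0).
    assert (Hge1 : 1 <= exp (- x)) by (rewrite <- exp_0; apply exp_le; lra).
    assert (Hx3 : x ^ 3 <= 0) by (simpl; nra).
    assert (Hq : exp x <= 1 + x + x ^ 2).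
    { apply (Rmult_le_reg_l (1 - x)); [lra|].
      replace ((1 - x) * (1 + x + x ^ 2)) with (1 - x ^ 3) by ring. nra. }
    assert (x ^ 2 <= x ^ 2 * exp (- x)) by (pose proof (pow2_ge_0 x); nra).
    lra.
Qed.

(** Curvature constant of [mgf delta None] on [[- L/2, L/2]], [L = phi delta None]. *)
Definition mgf_curvature (delta : R) : R :=
  exp delta * ((4 / (phi delta None / 2)) ^ 2 * geom_sum (phi delta None / 4)).

Lemma mgf_curvature_pos delta : 0 < delta -> 0 < mgf_curvature delta.
Proof.
  intro Hd. pose proof (phi_None_pos delta Hd). unfold mgf_curvature.
  apply Rmult_lt_0_compat; [apply exp_pos|].
  apply Rmult_lt_0_compat; [apply pow_lt, Rdiv_lt_0_compat | apply geom_sum_pos]; lra.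
Qed.

Lemma mgf_None_quadratic delta th : 0 < delta -> Rabs th <= phi delta None / 2 ->
  mgf delta None th <= 1 + th * mean_xi delta None + th ^ 2 * mgf_curvature delta.
Proof.
  intros Hd Hth. pose proof (phi_None_pos delta Hd) as HL. set (L := phi delta None) in *.
  pose proof (Rabs_le_inv _ _ Hth).
  apply (series_le_combination _ (pxi delta None) (fun n => INR n * pxi delta None n)
           _ _ _ _ _ (mgf_spec delta None th ltac:(fold L; lra))
           (pxi_sum delta None (phi_None_spec delta Hd)) (mean_spec delta Hd)).
  intro M.
  apply Rle_trans with (sum_f_R0 (fun n => pxi delta None n + th * (INR n * pxi delta None n)
           + th ^ 2 * (INR n ^ 2 * (pxi delta None n * exp (Rabs th * INR n)))) M).
  - apply sum_Rle. intros n _. pose proof (pxi_nonneg delta None n). pose proof (pos_INR n).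
    pose proof (exp_quadratic_bound (th * INR n)) as Hq.
    rewrite Rabs_mult, (Rabs_pos_eq (INR n)) in Hq by lra.
    apply Rle_trans with (pxi delta None n * (1 + th * INR n + (th * INR n) ^ 2 * exp (Rabs th * INR n))).
    + apply Rmult_le_compat_l; auto.
    + right. ring.
  - rewrite !sum_plus, !sum_scal_l. apply Rplus_le_compat_l.
    apply Rmult_le_compat_l; [apply pow2_ge_0|].
    rewrite (sum_eq _ (fun n => exp delta * (INR n ^ 2 * (q None n * exp (- ((L - Rabs th) * INR n))))))
      by (intros; rewrite pxi_exp_eq; fold L; ring).
    rewrite sum_scal_l. unfold mgf_curvature. fold L.
    apply Rmult_le_compat_l; [left; apply exp_pos|].
    replace (L / 4) with (L / 2 / 2) by field.
    apply second_moment_bound; [apply q_unit_bounded | lra | lra].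
Qed.

Lemma mgf_periodic_close delta t th eta : 0 < delta ->
  Rabs th <= phi delta None / 4 -> 0 <= eta <= phi delta None / 4 ->
  Rabs (phi delta (Some t) - phi delta None) <= eta ->
  Rabs (mgf delta (Some t) th - mgf delta None th)
    <= exp delta * (periodic_tail delta t
                    + eta * (2 / (phi delta None / 2) * geom_sum (phi delta None / 4))).
Proof.
  intros Hd Hth Heta Hp. pose proof (phi_None_pos delta Hd) as HL.
  set (L := phi delta None) in *. set (p := phi delta (Some t)) in *.
  pose proof (Rabs_le_inv _ _ Hth). pose proof (Rabs_le_inv _ _ Hp).
  unfold mgf. fold L p.
  rewrite <- Rmult_minus_distr_l, Rabs_mult, (Rabs_pos_eq (exp delta)) by (left; apply exp_pos).
  apply Rmult_le_compat_l; [left; apply exp_pos|].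
  replace (laplace (q (Some t)) (p - th) - laplace (q None) (L - th))
    with ((laplace (q (Some t)) (p - th) - laplace (q None) (p - th))
          + (laplace (q None) (p - th) - laplace (q None) (L - th))) by ring.
  eapply Rle_trans; [apply Rabs_triang|]. apply Rplus_le_compat.
  - apply laplace_periodic_tail; auto. fold L. lra.
  - eapply Rle_trans; [apply (laplace_lipschitz _ (q_unit_bounded None) (L / 2)); lra|].
    replace (L / 4) with (L / 2 / 2) by field.
    apply Rmult_le_compat_r.
    + left. apply Rmult_lt_0_compat; [apply Rdiv_lt_0_compat | apply geom_sum_pos]; lra.
    + replace (p - th - (L - th)) with (p - L) by ring. exact Hp.
Qed.

Lemma mgf_periodic_uniform delta rho : 0 < delta -> 0 < rho ->
  exists T0, forall t, (T0 <= t)%nat ->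
    infinite_sum (fun n => q (Some t) n * exp (- (phi delta (Some t) * INR n))) (exp (- delta)) /\
    3 * phi delta None / 4 <= phi delta (Some t) /\
    forall th, Rabs th <= phi delta None / 4 ->
      mgf delta (Some t) th <= 1 + th * mean_xi delta None + th ^ 2 * mgf_curvature delta + rho.
Proof.
  intros Hd Hrho. pose proof (phi_None_pos delta Hd) as HL. set (L := phi delta None) in *.
  set (K := 2 / (L / 2) * geom_sum (L / 4)).
  assert (HK : 0 < K) by (apply Rmult_lt_0_compat; [apply Rdiv_lt_0_compat | apply geom_sum_pos]; lra).
  pose proof (exp_pos delta) as Hed.
  set (eta := Rmin (L / 4) (rho / (2 * exp delta * K))).
  assert (Heta0 : 0 < eta)
    by (apply Rmin_pos; [|apply Rdiv_lt_0_compat]; nra).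
  assert (Heta1 : eta <= L / 4) by apply Rmin_l.
  assert (HetaK : exp delta * (eta * K) <= rho / 2).
  { assert (eta <= rho / (2 * exp delta * K)) by apply Rmin_r.
    apply (Rmult_le_compat_r (exp delta * K)) in H; [|nra].
    replace (rho / (2 * exp delta * K) * (exp delta * K)) with (rho / 2) in H by (field; nra). nra. }
  destruct (phi_periodic_close delta eta Hd Heta0 ltac:(fold L; lra)) as [T1 HT1].
  destruct (periodic_tail_eventually delta (rho / (2 * exp delta)) Hd
              ltac:(apply Rdiv_lt_0_compat; lra)) as [T2 HT2].
  exists (Nat.max T1 T2). intros t Ht.
  destruct (HT1 t ltac:(lia)) as [Hphi Hclose]. specialize (HT2 t ltac:(lia)). fold L in Hclose.
  split; [exact Hphi|]. split; [lra|].
  intros th Hth.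
  pose proof (mgf_periodic_close delta t th eta Hd Hth ltac:(fold L; lra)
                ltac:(apply Rabs_le; fold L; lra)) as Hcl.
  apply Rabs_le_inv in Hcl. fold L K in Hcl.
  pose proof (mgf_None_quadratic delta th Hd ltac:(fold L; lra)).
  assert (exp delta * periodic_tail delta t <= rho / 2).
  { apply (Rmult_le_reg_r (/ exp delta)); [apply Rinv_0_lt_compat; lra|].
    replace (exp delta * periodic_tail delta t * / exp delta) with (periodic_tail delta t)
      by (field; lra).
    replace (rho / 2 * / exp delta) with (rho / (2 * exp delta)) by (field; lra). lra. }
  nra.
Qed.

(** * Renewal sequences and Chernoff bounds for [tau_k]

    For a law [a] on the positive integers, [renewal_cdf a k m] is
    [P(tau_k <= m)], computed by conditioning on [xi_1].  Exponential
    moments of [a] give Chernoff bounds on both tails of [tau_k]. *)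

Fixpoint renewal_cdf (a : nat -> R) (k : nat) : nat -> R :=
  match k with
  | O => fun _ => 1
  | S k' => fun m => sum_f_R0 (fun x => a x * renewal_cdf a k' (m - x)) m
  end.

Lemma P_tau_le_renewal delta T : forall k m,
  P_tau_le delta T k m = renewal_cdf (pxi delta T) k m.
Proof.
  induction k as [|k IH]; intro m; [unfold P_tau_le, prodR; simpl; ring|].
  unfold P_tau_le at 1. cbn [comps renewal_cdf]. rewrite sumR_flat_map.
  transitivity (sumR (map (fun x => pxi delta T x * P_tau_le delta T k (m - x)%nat) (seq 1 m))).
  { f_equal. apply map_ext. intro x. rewrite map_map. unfold P_tau_le. rewrite <- sumR_scal.
    reflexivity. }
  rewrite sum_f_R0_sumR. cbn [seq map]. change (sumR (?x :: ?l)) with (x + sumR l). rewrite (pxi_0 delta T).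
  rewrite Rmult_0_l, Rplus_0_l. f_equal. apply map_ext. intro x. rewrite IH. reflexivity.
Qed.

Definition renewal_dev (a : nat -> R) (N : nat) (s eps : R) : R :=
  sumR (map (fun k => if Rlt_dec eps (Rabs (INR k / INR N - s))
                      then renewal_cdf a k N - renewal_cdf a (S k) N else 0)
            (seq 0 (S N))).

Lemma P_dev_renewal delta T N s eps :
  P_dev delta T N s eps = renewal_dev (pxi delta T) N s eps.
Proof.
  unfold P_dev, renewal_dev, P_L_eq. f_equal. apply map_ext. intro k.
  rewrite !P_tau_le_renewal. reflexivity.
Qed.

Lemma series_tail_le f g lf lg m : infinite_sum f lf -> infinite_sum g lg ->
  (forall x, (m < x)%nat -> f x <= g x) -> lf - sum_f_R0 f m <= lg - sum_f_R0 g m.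
Proof.
  intros Hf Hg H.
  apply (Rle_cv_lim (Un := fun M => sum_f_R0 f (M + m) - sum_f_R0 f m)
                    (Vn := fun M => sum_f_R0 g (M + m) - sum_f_R0 g m)).
  - induction n as [|n IH]; simpl; [lra|]. pose proof (H (S (n + m)) ltac:(lia)). lra.
  - apply CV_minus; [apply CV_shift'; exact Hf | apply cv_const].
  - apply CV_minus; [apply CV_shift'; exact Hg | apply cv_const].
Qed.

Section Renewal.

Variable a : nat -> R.
Hypothesis a_nonneg : forall n, 0 <= a n.
Hypothesis a_sum : infinite_sum a 1.

Lemma renewal_cdf_nonneg : forall k m, 0 <= renewal_cdf a k m.
Proof.
  induction k as [|k IH]; intro m; simpl; [lra|]. apply cond_pos_sum.
  intro n. apply Rmult_le_pos; auto.
Qed.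

Lemma renewal_cdf_step_le : forall k m, renewal_cdf a (S k) m <= renewal_cdf a k m.
Proof.
  induction k as [|k IH]; intro m.
  - simpl. rewrite (sum_eq _ a) by (intros; ring). apply sum_incr; auto.
  - simpl. apply sum_Rle. intros n _. apply Rmult_le_compat_l; auto. apply IH.
Qed.

Lemma renewal_cdf_antitone k1 k2 m : (k1 <= k2)%nat -> renewal_cdf a k2 m <= renewal_cdf a k1 m.
Proof.
  induction 1 as [|k2 _ IH]; [lra|]. pose proof (renewal_cdf_step_le k2 m). lra.
Qed.

(** Since [xi >= 1], [tau_k >= k]. *)
Lemma renewal_cdf_vanish : a 0%nat = 0 -> forall k m, (m < k)%nat -> renewal_cdf a k m = 0.
Proof.
  intros a0. induction k as [|k IH]; intros m Hm; [lia|]. simpl.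
  rewrite (sum_eq _ (fun _ => 0 * 0)); [rewrite sum_scal_l; ring|].
  intros [|i] Hi; [rewrite a0; ring|]. rewrite IH by lia. ring.
Qed.

Lemma chernoff_upper th G : 0 <= th -> 0 <= G ->
  (forall m, sum_f_R0 (fun x => a x * exp (- (th * INR x))) m <= G) ->
  forall k m, renewal_cdf a k m <= exp (th * INR m) * G ^ k.
Proof.
  intros Hth HG HS. induction k as [|k IH]; intro m.
  - simpl. rewrite Rmult_1_r, <- exp_0. apply exp_le. pose proof (pos_INR m). nra.
  - simpl.
    apply Rle_trans with
      (sum_f_R0 (fun x => (exp (th * INR m) * G ^ k) * (a x * exp (- (th * INR x)))) m).
    + apply sum_Rle. intros n Hn. specialize (IH (m - n)%nat).
      rewrite minus_INR in IH by lia.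
      replace (exp (th * (INR m - INR n))) with (exp (th * INR m) * exp (- (th * INR n))) in IH
        by (rewrite <- exp_plus; f_equal; ring).
      pose proof (a_nonneg n).
      apply Rle_trans with (a n * (exp (th * INR m) * exp (- (th * INR n)) * G ^ k));
        [apply Rmult_le_compat_l; auto | right; ring].
    + rewrite sum_scal_l, (Rmult_comm G), <- Rmult_assoc.
      apply Rmult_le_compat_l; [apply Rmult_le_pos; [left; apply exp_pos | apply pow_le; auto]|].
      apply HS.
Qed.

Lemma renewal_tail_markov th H m : 0 <= th ->
  infinite_sum (fun x => a x * exp (th * INR x)) H ->
  1 - sum_f_R0 a m
    <= exp (- (th * INR m)) * H - sum_f_R0 (fun x => a x * exp (th * INR x) * exp (- (th * INR m))) m.
Proof.
  intros Hth HH.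
  apply (series_tail_le _ _ _ _ m a_sum).
  - apply (series_ext (fun x => exp (- (th * INR m)) * (a x * exp (th * INR x)))); [intro; ring|].
    apply series_scal. exact HH.
  - intros x Hx. rewrite Rmult_assoc, <- exp_plus. rewrite <- (Rmult_1_r (a x)) at 1.
    apply Rmult_le_compat_l; auto. rewrite <- exp_0. apply exp_le.
    assert (INR m <= INR x) by (apply le_INR; lia). nra.
Qed.

Lemma chernoff_lower th H : 0 <= th ->
  infinite_sum (fun x => a x * exp (th * INR x)) H ->
  forall k m, 1 - renewal_cdf a k m <= exp (- (th * INR m)) * H ^ k.
Proof.
  intros Hth HH.
  assert (H1 : 1 <= H).
  { apply (series_le _ _ _ _ a_sum HH). intro n. rewrite <- (Rmult_1_r (a n)) at 1.
    apply Rmult_le_compat_l; auto. rewrite <- exp_0. apply exp_le. pose proof (pos_INR n). nra. }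
  induction k as [|k IH]; intro m.
  - simpl. pose proof (exp_pos (- (th * INR m))). lra.
  - simpl.
    set (S := sum_f_R0 (fun x => a x * exp (th * INR x) * exp (- (th * INR m))) m).
    pose proof (renewal_tail_markov th H m Hth HH) as Htail. fold S in Htail.
    assert (Hk : 1 <= H ^ k) by (apply pow_R1_Rle; auto).
    assert (Hsplit : 1 - sum_f_R0 (fun x => a x * renewal_cdf a k (m - x)%nat) m
             = (1 - sum_f_R0 a m) + sum_f_R0 (fun x => a x * (1 - renewal_cdf a k (m - x)%nat)) m).
    { rewrite (sum_eq (fun x => a x * (1 - renewal_cdf a k (m - x)%nat)) (fun x => a x - a x * renewal_cdf a k (m - x)%nat))
        by (intros; ring).
      rewrite minus_sum. ring. }
    assert (Hhead : sum_f_R0 (fun x => a x * (1 - renewal_cdf a k (m - x)%nat)) m <= H ^ k * S).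
    { unfold S. rewrite <- sum_scal_l. apply sum_Rle. intros n Hn.
      specialize (IH (m - n)%nat). rewrite minus_INR in IH by lia.
      replace (exp (- (th * (INR m - INR n)))) with (exp (th * INR n) * exp (- (th * INR m))) in IH
        by (rewrite <- exp_plus; f_equal; ring).
      pose proof (a_nonneg n). apply Rle_trans with (a n * (exp (th * INR n) * exp (- (th * INR m)) * H ^ k));
        [apply Rmult_le_compat_l; auto | right; ring]. }
    assert (0 <= S).
    { unfold S. apply cond_pos_sum. intro n.
      apply Rmult_le_pos; [apply Rmult_le_pos; auto|]; left; apply exp_pos. }
    assert (sum_f_R0 a m <= 1) by (apply sum_incr; auto).
    assert (Hpos : 0 <= exp (- (th * INR m)) * H - S) by lra.
    rewrite Hsplit.
    apply Rle_trans with (H ^ k * (exp (- (th * INR m)) * H - S) + H ^ k * S); [nra | right; ring].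
Qed.

End Renewal.

Lemma telescope_below (f : nat -> R) K L :
  sumR (map (fun k => if (k <? K)%nat then f k - f (S k) else 0) (seq 0 L)) = f 0%nat - f (Nat.min K L).
Proof.
  induction L as [|L IH]; [simpl; rewrite Nat.min_0_r; ring|].
  rewrite seq_S, map_app, sumR_app, IH. simpl. destruct (Nat.ltb_spec L K).
  - rewrite (Nat.min_r K (S L)), (Nat.min_r K L) by lia. ring.
  - rewrite (Nat.min_l K (S L)), (Nat.min_l K L) by lia. ring.
Qed.

Lemma telescope_above (f : nat -> R) K L :
  sumR (map (fun k => if (K <=? k)%nat then f k - f (S k) else 0) (seq 0 L)) = f (Nat.min K L) - f L.
Proof.
  induction L as [|L IH]; [simpl; rewrite Nat.min_0_r; ring|].
  rewrite seq_S, map_app, sumR_app, IH. simpl. destruct (Nat.leb_spec K L).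
  - rewrite (Nat.min_l K (S L)), (Nat.min_l K L) by lia. ring.
  - rewrite (Nat.min_r K (S L)), (Nat.min_r K L) by lia. ring.
Qed.

(** [L_N / N] is off by more than [eps] only if [L_N < K1 <= (s-eps) N]
    roughly, i.e. [tau_K1 > N], or [L_N >= K2 >= (s+eps) N], i.e. [tau_K2 <= N]. *)
Lemma renewal_dev_split a N s eps K1 K2 :
  (forall n, 0 <= a n) -> a 0%nat = 0 -> infinite_sum a 1 -> (1 <= N)%nat ->
  (forall k, INR k < (s - eps) * INR N -> (k < K1)%nat) ->
  (forall k, (s + eps) * INR N < INR k -> (K2 <= k)%nat) ->
  renewal_dev a N s eps <= (1 - renewal_cdf a K1 N) + renewal_cdf a K2 N.
Proof.
  intros Ha Ha0 Hs HN H1 H2.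
  set (P := renewal_cdf a).
  pose proof (renewal_cdf_step_le a Ha Hs) as Pstep.
  pose proof (renewal_cdf_nonneg a Ha) as Pnn.
  pose proof (renewal_cdf_vanish a Ha0) as Pz.
  assert (HNp : 0 < INR N) by (apply lt_0_INR; lia).
  unfold renewal_dev. fold P. fold P in Pstep. fold P in Pnn. fold P in Pz.
  apply Rle_trans with (sumR (map (fun k => (if (k <? K1)%nat then P k N - P (S k) N else 0)
                         + (if (K2 <=? k)%nat then P k N - P (S k) N else 0)) (seq 0 (S N)))).
  - apply sumR_le. intro k. pose proof (Pstep k N).
    assert (0 <= (if (k <? K1)%nat then P k N - P (S k) N else 0)) by (destruct (k <? K1)%nat; lra).
    assert (0 <= (if (K2 <=? k)%nat then P k N - P (S k) N else 0)) by (destruct (K2 <=? k)%nat; lra).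
    destruct (Rlt_dec eps (Rabs (INR k / INR N - s))) as [Hd|]; [|lra].
    assert (Ek : INR k = INR k / INR N * INR N) by (field; lra).
    destruct (Rle_lt_dec 0 (INR k / INR N - s)) as [Hr|Hr].
    + rewrite Rabs_pos_eq in Hd by lra.
      assert (Hk : (s + eps) * INR N < INR k) by (rewrite Ek; apply Rmult_lt_compat_r; lra).
      specialize (H2 k Hk). destruct (Nat.leb_spec K2 k); [|lia]. lra.
    + rewrite Rabs_left in Hd by lra.
      assert (Hk : INR k < (s - eps) * INR N) by (rewrite Ek; apply Rmult_lt_compat_r; lra).
      specialize (H1 k Hk). destruct (Nat.ltb_spec k K1); [|lia]. lra.
  - rewrite sumR_plus, (telescope_below (fun k => P k N)), (telescope_above (fun k => P k N)).
    unfold P at 1. simpl renewal_cdf. rewrite (Pz (S N) N) by lia.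
    assert (P K1 N <= P (Nat.min K1 (S N)) N) by (apply renewal_cdf_antitone; auto; lia).
    destruct (Nat.leb_spec K2 (S N)).
    + rewrite (Nat.min_l K2 (S N)) by lia. lra.
    + rewrite (Nat.min_r K2 (S N)) by lia. rewrite (Pz (S N) N) by lia. pose proof (Pnn K2 N). lra.
Qed.

Definition ceil_nat (x : R) : nat := Z.to_nat (up x).

Lemma lt_ceil_nat x k : INR k < x -> (k < ceil_nat x)%nat.
Proof.
  intro H. destruct (archimed x) as [Ha _]. rewrite INR_IZR_INZ in H.
  assert (Z.of_nat k < up x)%Z by (apply lt_IZR; lra). unfold ceil_nat. lia.
Qed.

Lemma ceil_nat_le x k : x < INR k -> (ceil_nat x <= k)%nat.
Proof.
  intro H. destruct (archimed x) as [Ha Hb]. rewrite INR_IZR_INZ in H. unfold ceil_nat.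
  destruct (Z_le_gt_dec (up x) (Z.of_nat k)); [lia|].
  assert (Z.of_nat k + 1 <= up x)%Z by lia. apply IZR_le in H0. rewrite plus_IZR in H0. simpl in H0. lra.
Qed.

Lemma ceil_nat_ge x : 0 <= x -> x <= INR (ceil_nat x).
Proof.
  intro H. destruct (archimed x) as [Ha _]. unfold ceil_nat.
  assert (0 < up x)%Z by (apply lt_IZR; simpl; lra).
  rewrite INR_IZR_INZ, Z2Nat.id by lia. lra.
Qed.

Lemma ceil_nat_le_max x : INR (ceil_nat x) <= Rmax 0 x + 1.
Proof.
  destruct (archimed x) as [_ Hb]. pose proof (Rmax_l 0 x). pose proof (Rmax_r 0 x). unfold ceil_nat.
  destruct (Z_le_gt_dec (up x) 0).
  - assert (Z.to_nat (up x) = 0%nat) as -> by lia. simpl. lra.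
  - rewrite INR_IZR_INZ, Z2Nat.id by lia. lra.
Qed.

Section LargeDeviation.

Variable a : nat -> R.
Hypothesis a_nonneg : forall n, 0 <= a n.
Hypothesis a_0 : a 0%nat = 0.
Hypothesis a_sum : infinite_sum a 1.
Variables s eps th gam : R.
Hypothesis s_pos : 0 < s.
Hypothesis eps_pos : 0 < eps.
Hypothesis th_pos : 0 < th.
Hypothesis gam_pos : 0 < gam.

Lemma renewal_upper_deviation G b N :
  infinite_sum (fun x => a x * exp (- (th * INR x))) G -> G <= exp (- b) ->
  th + gam <= b * (s + eps) ->
  renewal_cdf a (ceil_nat ((s + eps) * INR N)) N <= exp (- (gam * INR N)).
Proof.
  intros HG HGb Hrate.
  set (K2 := ceil_nat ((s + eps) * INR N)).
  assert (Hterm : forall x, 0 <= a x * exp (- (th * INR x)))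
    by (intro; apply Rmult_le_pos; [auto | left; apply exp_pos]).
  assert (HG0 : 0 <= G) by (eapply Rle_trans; [apply (Hterm 0%nat) | apply (sum_incr _ 0 _ HG Hterm)]).
  assert (Hb : 0 <= b) by (destruct (Rle_lt_dec 0 b); [auto | nra]).
  pose proof (pos_INR N).
  eapply Rle_trans.
  { apply (chernoff_upper a a_nonneg th G); [lra | lra |].
    intro m. apply sum_incr; [exact HG | exact Hterm]. }
  assert (HGk : G ^ K2 <= exp (- b) ^ K2) by (apply pow_incr; lra).
  rewrite exp_pow_nat in HGk.
  pose proof (ceil_nat_ge ((s + eps) * INR N) ltac:(nra)). fold K2 in H0.
  apply Rle_trans with (exp (th * INR N) * exp (- b * INR K2));
    [apply Rmult_le_compat_l; [left; apply exp_pos | exact HGk]|].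
  rewrite <- exp_plus. apply exp_le.
  assert (b * ((s + eps) * INR N) <= b * INR K2) by (apply Rmult_le_compat_l; lra).
  assert ((th + gam) * INR N <= b * (s + eps) * INR N) by (apply Rmult_le_compat_r; lra).
  nra.
Qed.

Lemma renewal_lower_deviation H b' N :
  infinite_sum (fun x => a x * exp (th * INR x)) H -> H <= exp b' -> 0 <= b' ->
  Rmax 0 (s - eps) * b' <= th - gam ->
  1 - renewal_cdf a (ceil_nat ((s - eps) * INR N)) N <= exp b' * exp (- (gam * INR N)).
Proof.
  intros HH HHb Hb' Hrate.
  set (K1 := ceil_nat ((s - eps) * INR N)).
  pose proof (pos_INR N).
  eapply Rle_trans; [apply (chernoff_lower a a_nonneg a_sum th H); [lra | exact HH]|].
  assert (H1 : 1 <= H).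
  { apply (series_le _ _ _ _ a_sum HH). intro n. rewrite <- (Rmult_1_r (a n)) at 1.
    apply Rmult_le_compat_l; auto. rewrite <- exp_0. apply exp_le. pose proof (pos_INR n). nra. }
  assert (HHk : H ^ K1 <= exp b' ^ K1) by (apply pow_incr; lra).
  rewrite exp_pow_nat in HHk.
  pose proof (ceil_nat_le_max ((s - eps) * INR N)). fold K1 in H2.
  apply Rle_trans with (exp (- (th * INR N)) * exp (b' * INR K1));
    [apply Rmult_le_compat_l; [left; apply exp_pos | exact HHk]|].
  rewrite <- !exp_plus. apply exp_le.
  assert (Hmax : Rmax 0 ((s - eps) * INR N) = INR N * Rmax 0 (s - eps))
    by (rewrite <- RmaxRmult by lra; f_equal; ring).
  assert (INR N * (Rmax 0 (s - eps) * b') <= INR N * (th - gam)) by (apply Rmult_le_compat_l; lra).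
  assert (b' * INR K1 <= b' * (Rmax 0 ((s - eps) * INR N) + 1)) by (apply Rmult_le_compat_l; lra).
  nra.
Qed.

Lemma renewal_large_deviation G H b b' N :
  infinite_sum (fun x => a x * exp (- (th * INR x))) G -> G <= exp (- b) ->
  infinite_sum (fun x => a x * exp (th * INR x)) H -> H <= exp b' -> 0 <= b' ->
  th + gam <= b * (s + eps) -> Rmax 0 (s - eps) * b' <= th - gam -> (1 <= N)%nat ->
  renewal_dev a N s eps <= (exp b' + 1) * exp (- (gam * INR N)).
Proof.
  intros HG HGb HH HHb Hb' Hup Hlow HN.
  eapply Rle_trans.
  { apply (renewal_dev_split a N s eps (ceil_nat ((s - eps) * INR N)) (ceil_nat ((s + eps) * INR N))
             a_nonneg a_0 a_sum HN).
    - intros k Hk. apply lt_ceil_nat. exact Hk.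
    - intros k Hk. apply ceil_nat_le. exact Hk. }
  pose proof (renewal_upper_deviation G b N HG HGb Hup).
  pose proof (renewal_lower_deviation H b' N HH HHb Hb' Hlow). lra.
Qed.

End LargeDeviation.

(** * Choice of the Chernoff parameters and proof of the theorem *)

(** With [s = 1/m], a small tilt [th] and rate [gam] make both Chernoff
    exponents of [renewal_large_deviation] work against a quadratic error
    [th^2 C] in the moment generating function. *)
Lemma rate_parameters m C eps th_max : 0 < m -> 0 < C -> 0 < eps -> 0 < th_max ->
  exists th gam, 0 < th <= th_max /\ 0 < gam /\
    th + gam <= (th * m - th ^ 2 * C) * (1 / m + eps) /\
    Rmax 0 (1 / m - eps) * (th * m + th ^ 2 * C) <= th - gam.
Proof.
  intros Hm HC Heps Hmax. set (s := 1 / m).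
  assert (Hs : 0 < s) by (apply Rdiv_lt_0_compat; lra).
  assert (Hsm : s * m = 1) by (unfold s; field; lra).
  set (th := Rmin th_max (Rmin (eps * m / (2 * C * (s + eps))) (eps * m * m / (2 * C)))).
  assert (Hth : 0 < th)
    by (apply Rmin_pos; [lra|]; apply Rmin_pos; apply Rdiv_lt_0_compat; repeat apply Rmult_lt_0_compat; lra).
  assert (Hth1 : th <= eps * m / (2 * C * (s + eps)))
    by (eapply Rle_trans; [apply Rmin_r | apply Rmin_l]).
  assert (Hth2 : th <= eps * m * m / (2 * C))
    by (eapply Rle_trans; [apply Rmin_r | apply Rmin_r]).
  (* the quadratic corrections are at most half of the linear gain [th m eps] *)
  assert (Hq1 : th ^ 2 * C * (s + eps) <= th * m * eps / 2).
  { apply (Rmult_le_compat_r (th * C * (s + eps))) in Hth1;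
    [|apply Rmult_le_pos; [apply Rmult_le_pos|]; lra].
    replace (eps * m / (2 * C * (s + eps)) * (th * C * (s + eps))) with (th * m * eps / 2) in Hth1
      by (field; nra).
    replace (th ^ 2 * C * (s + eps)) with (th * (th * C * (s + eps))) by ring. lra. }
  assert (Hq2 : th ^ 2 * C * s <= th * m * eps / 2).
  { apply (Rmult_le_compat_r (th * C * s)) in Hth2;
    [|apply Rmult_le_pos; [apply Rmult_le_pos|]; lra].
    replace (eps * m * m / (2 * C) * (th * C * s)) with (th * m * eps / 2 * (s * m)) in Hth2
      by (field; nra).
    rewrite Hsm, Rmult_1_r in Hth2. replace (th ^ 2 * C * s) with (th * (th * C * s)) by ring. lra. }
  set (gam := Rmin (th * m * eps / 2) th).
  assert (Hg : 0 < gam)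
    by (apply Rmin_pos; [apply Rdiv_lt_0_compat; [repeat apply Rmult_lt_0_compat|]|]; lra).
  assert (Hg1 : gam <= th * m * eps / 2) by apply Rmin_l.
  assert (Hg2 : gam <= th) by apply Rmin_r.
  exists th, gam. fold s. split; [split; [lra | apply Rmin_l]|]. split; [exact Hg|]. split.
  - assert (th * m * s = th) by nra. nra.
  - unfold Rmax. destruct (Rle_dec 0 (s - eps)); [|nra].
    assert (th * m * s = th) by nra.
    assert ((s - eps) * (th ^ 2 * C) <= s * (th ^ 2 * C)) by (apply Rmult_le_compat_r; simpl; nra).
    nra.
Qed.

Lemma periodic_exp_moments delta th : 0 < delta -> 0 < th <= phi delta None / 4 ->
  let m := mean_xi delta None in
  let C := mgf_curvature delta + 1 in
  exists T0, forall t, (T0 <= t)%nat ->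
    infinite_sum (pxi delta (Some t)) 1 /\
    (exists G, infinite_sum (fun x => pxi delta (Some t) x * exp (- (th * INR x))) G /\
               G <= exp (- (th * m - th ^ 2 * C))) /\
    (exists H, infinite_sum (fun x => pxi delta (Some t) x * exp (th * INR x)) H /\
               H <= exp (th * m + th ^ 2 * C)).
Proof.
  intros Hd Hth m C.
  destruct (mgf_periodic_uniform delta (th ^ 2) Hd ltac:(simpl; nra)) as [T0 HT0].
  exists T0. intros t Ht. destruct (HT0 t Ht) as [Hphi [Hp Hmgf]].
  pose proof (phi_None_pos delta Hd).
  split; [exact (pxi_sum delta (Some t) Hphi)|]. split.
  - exists (mgf delta (Some t) (- th)). split.
    + apply (series_ext (fun x => pxi delta (Some t) x * exp (- th * INR x))).
      * intro x. rewrite Ropp_mult_distr_l. reflexivity.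
      * apply mgf_spec. lra.
    + pose proof (Hmgf (- th) ltac:(rewrite Rabs_Ropp, Rabs_pos_eq; lra)) as Hneg.
      replace ((- th) ^ 2) with (th ^ 2) in Hneg by ring.
      pose proof (exp_ineq1_le (- (th * m - th ^ 2 * C))). unfold C, m in *. lra.
  - exists (mgf delta (Some t) th). split; [apply mgf_spec; lra|].
    pose proof (Hmgf th ltac:(rewrite Rabs_pos_eq; lra)).
    pose proof (exp_ineq1_le (th * m + th ^ 2 * C)). unfold C, m in *. lra.
Qed.

Lemma periodic_deviation_exponential delta eps : 0 < delta -> 0 < eps ->
  exists T0 gam K, 0 < gam /\ forall T N, (T0 <= T)%nat -> (1 <= N)%nat ->
    P_dev delta (Some T) N (1 / mean_xi delta None) eps <= K * exp (- (gam * INR N)).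
Proof.
  intros Hd Heps.
  pose proof (phi_None_pos delta Hd) as HL. pose proof (mean_ge1 delta Hd) as Hm.
  set (m := mean_xi delta None) in *. set (C := mgf_curvature delta + 1).
  assert (HC : 0 < C) by (pose proof (mgf_curvature_pos delta Hd); unfold C; lra).
  destruct (rate_parameters m C eps (phi delta None / 4) ltac:(lra) HC Heps ltac:(lra))
    as [th [gam [Hth [Hgam [Hup Hlow]]]]].
  set (b' := th * m + th ^ 2 * C).
  destruct (periodic_exp_moments delta th Hd Hth) as [T0 HT0].
  exists T0, gam, (exp b' + 1). split; [exact Hgam|]. intros T N HT HN.
  destruct (HT0 T HT) as [Hsum [[G [HG HGb]] [H [HH HHb]]]].
  rewrite P_dev_renewal.
  apply (renewal_large_deviation _ (pxi_nonneg delta (Some T)) (pxi_0 delta (Some T)) Hsum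
           (1 / m) eps th gam) with (G := G) (H := H) (b := th * m - th ^ 2 * C);
    auto; try lra.
  - apply Rdiv_lt_0_compat; lra.
  - unfold b'. pose proof (pow2_ge_0 th). nra.
Qed.

Theorem lemma8 (delta : R) (hdelta : 0 < delta) :
  let s_inf := 1 / mean_xi delta None in
  forall eps : R, 0 < eps ->
  exists T0 : nat,
    forall eta : R, 0 < eta ->
    exists N0 : nat, forall N : nat, (N0 <= N)%nat ->
      forall T : nat, (0 < T)%nat -> Nat.Even T -> (T0 <= T)%nat ->
        P_dev delta (Some T) N s_inf eps <= eta.
Proof.
  intros s_inf eps Heps.
  destruct (periodic_deviation_exponential delta eps hdelta Heps) as [T0 [gam [K [Hgam Hdev]]]].
  exists T0. intros eta Heta.
  destruct (exp_decay_eventually gam K eta Hgam Heta) as [N1 HN1].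
  exists (Nat.max N1 1). intros N HN T _ _ HT.
  left. eapply Rle_lt_trans; [apply Hdev; lia | rewrite Rmult_comm; apply HN1; lia].
Qed.
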